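(* Assume an i.i.d. sample of $(Y,X)$ of size $n$ from the Gaussian functional linear model, and let $[\ell]_j^2=j^{-2s}$ for all $j\ge1$. Then the order of $\mathcal R^\ell_*[(1+\log n)n^{-1}]$ is as follows. (pp) If $\beta_j=j^{2p}$, $\gamma_j=j^{-2a}$ with $p>0$, $a>1/2$, $p+a\ge3/2$ and $s>1/2-p$, then $\mathcal R^\ell_*[(1+\log n)n^{-1}]\asymp (n^{-1}\log n)^{(2p+2s-1)/(2p+2a)}$ if $s-a<1/2$; $\asymp n^{-1}(\log n)^2$ if $s-a=1/2$; $\asymp n^{-1}\log n$ if $s-a>1/2$. (pe) If $\beta_j=j^{2p}$, $\gamma_j=\exp(-j^{2a}+1)$ with $p>0$, $a>0$ and $s>1/2-p$, then $\mathcal R^\ell_*[(1+\log n)n^{-1}]\asymp(\log n)^{-(2p+2s-1)/(2a)}$. (ep) If $\beta_j=\exp(j^{2p}-1)$, $\gamma_j=j^{-2a}$ with $p>0$, $a>1/2$ and $s\in\mathbb R$, then $\mathcal R^\ell_*[(1+\log n)n^{-1}]\asymp n^{-1}(\log n)^{(2p+2a-2s+1)/(2p)}$ if $s-a<1/2$; $\asymp n^{-1}(\log n)(\log\log n)$ if $s-a=1/2$; $\asymp n^{-1}\log n$ if $s-a>1/2$.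
   Context: For strictly positive sequences $\beta,\gamma$ and real numbers $[\ell]_j$, $j\ge1$, define for $m\ge1$ and $x\in(0,1]$ $$\mathcal R^\ell_m[x]:=\max\Big\{\sum_{j>m}\frac{[\ell]_j^2}{\beta_j},\ \max\Big(\frac{\gamma_m}{\beta_m},x\Big)\sum_{j=1}^m\frac{[\ell]_j^2}{\gamma_j}\Big\},\qquad\mathcal R^\ell_*[x]:=\min_{m\ge1}\mathcal R^\ell_m[x].$$ (In the paper $\beta$ describes the ellipsoid $\{h:\sum_j\beta_j\langle h,\psi_j\rangle^2\le r\}$ of slope functions, $\gamma$ the decay of the covariance operator, and $[\ell]_j=\ell(\psi_j)$ the coefficients of the linear functional.) For positive sequences, $x_n\asymp y_n$ means $x_n/y_n$ is bounded away from zero and infinity. *)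

From Stdlib Require Import Reals Lra.
From Coquelicot Require Import Coquelicot.
Open Scope R_scope.

(* Sequences are functions nat -> R; only indices j >= 1 are used. *)

Fixpoint psum (f : nat -> R) (m : nat) : R :=
  match m with
  | O => 0
  | S m' => psum f m' + f (S m')
  end.

(* tail f m = sum_{j>m} f j  (as a series; convergent in all cases considered) *)
Definition tail (f : nat -> R) (m : nat) : R :=
  Series (fun k => f (m + 1 + k)%nat).

Definition Rm (l beta gamma : nat -> R) (x : R) (m : nat) : R :=
  Rmax (tail (fun j => (l j) ^ 2 / beta j) m)
       (Rmax (gamma m / beta m) x * psum (fun j => (l j) ^ 2 / gamma j) m).

(* R^l_*[x] = min_{m>=1} R^l_m[x], taken as the infimum of the values *)
Definition Rstar (l beta gamma : nat -> R) (x : R) : R :=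
  real (Glb_Rbar (fun y => exists m : nat, (1 <= m)%nat /\ y = Rm l beta gamma x m)).

Definition Rstar_seq (l beta gamma : nat -> R) (n : nat) : R :=
  Rstar l beta gamma ((1 + ln (INR n)) / INR n).

Definition asymp (u v : nat -> R) : Prop :=
  exists c C : R, exists N : nat, 0 < c /\ 0 < C /\
    forall n : nat, (N <= n)%nat -> c * v n <= u n <= C * v n.

From Stdlib Require Import Reals.
From Coquelicot Require Import Coquelicot.
From Stdlib Require Import Lra Lia Psatz.
Open Scope R_scope.

(* With [l]_j^2 = j^(-2s), the quantity R_m[x] is max (T_m, max (g_m, x) S_m), where
   T_m = sum_{j>m} [l]_j^2/beta_j, S_m = sum_{j<=m} [l]_j^2/gamma_j and g_m = gamma_m/beta_m.
   In each regime these are estimated by explicit functions of m: power sums by telescoping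
   against j^al (against log j for the harmonic sum), sums with exponential weights by
   their last or first term.  Put L = log n, so that x = (1 + L) e^(-L).  For the lower
   bound, every m lies either below a balance point, where T_m alone is large enough, or
   above it, where x S_m is; for the upper bound R_m is evaluated at an m close to the
   balance point, where g_m <= x and both T_m and x S_m have the claimed order. *)

Lemma exp_le_compat x y : x <= y -> exp x <= exp y.
Proof. intros [H|H]; [left; apply exp_increasing; auto | subst; lra]. Qed.

Lemma ln_le_sub_1 x : 0 < x -> ln x <= x - 1.
Proof. intros Hx. pose proof (exp_ineq1_le (ln x)). rewrite exp_ln in H; lra. Qed.

Lemma one_sub_inv_le_ln x : 0 < x -> 1 - / x <= ln x.
Proof.
  intros Hx. pose proof (ln_le_sub_1 (/ x) (Rinv_0_lt_compat _ Hx)).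
  rewrite ln_Rinv in H; lra.
Qed.

Lemma Rpower_pos x y : 0 < Rpower x y.
Proof. apply exp_pos. Qed.

Lemma Rpower_1_l y : Rpower 1 y = 1.
Proof. unfold Rpower; rewrite ln_1, Rmult_0_r; apply exp_0. Qed.

Lemma Rpower_div x a b : 0 < x -> Rpower x a / Rpower x b = Rpower x (a - b).
Proof.
  intros. unfold Rpower, Rminus. rewrite Rmult_plus_distr_r, exp_plus.
  unfold Rdiv. rewrite <- exp_Ropp. f_equal. f_equal. ring.
Qed.

Lemma Rpower_le_base x y e : 0 <= e -> 0 < x -> x <= y -> Rpower x e <= Rpower y e.
Proof. intros; apply Rle_Rpower_l; auto. Qed.

Lemma Rpower_le_base_neg x y e : e <= 0 -> 0 < x -> x <= y -> Rpower y e <= Rpower x e.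
Proof.
  intros He Hx Hxy. unfold Rpower. apply exp_le_compat.
  assert (ln x <= ln y) by (apply ln_le; auto). nra.
Qed.

Lemma Rpower_le_1 x e : 1 <= x -> e <= 0 -> Rpower x e <= 1.
Proof. intros. rewrite <- (Rpower_1_l e). apply Rpower_le_base_neg; lra. Qed.

Lemma Rpower_ge_1 x e : 1 <= x -> 0 <= e -> 1 <= Rpower x e.
Proof. intros. rewrite <- (Rpower_1_l e). apply Rpower_le_base; lra. Qed.

Lemma Rpower_inv x e : 0 < x -> Rpower (/ x) e = Rpower x (- e).
Proof. intros. unfold Rpower. rewrite ln_Rinv by auto. f_equal; ring. Qed.

Lemma Rpower_minus_1 x e : 0 < x -> Rpower x (e - 1) = Rpower x e / x.
Proof. intros. rewrite <- Rpower_div by auto. rewrite Rpower_1; auto. Qed.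

Lemma Rpower_plus_1 y e : 0 < y -> y * Rpower y e = Rpower y (e + 1).
Proof. intros. rewrite Rpower_plus, Rpower_1 by auto. ring. Qed.

Lemma Rpower_exp x e : Rpower (exp x) e = exp (e * x).
Proof. unfold Rpower; rewrite ln_exp; auto. Qed.

Lemma Rpower_m1 y : 0 < y -> Rpower y (-1) = / y.
Proof.
  intros. unfold Rpower. replace (-1 * ln y) with (- ln y) by ring.
  rewrite exp_Ropp, exp_ln; auto.
Qed.

Lemma exp_half L : exp (L / 2) / exp L = exp (- (L / 2)).
Proof.
  replace L with (L / 2 + L / 2) at 2 by field. rewrite exp_plus, exp_Ropp. field.
  apply Rgt_not_eq, exp_pos.
Qed.

Lemma ln_2_le_1 : ln 2 <= 1.
Proof. rewrite <- (ln_exp 1). apply ln_le; [lra|]. pose proof (exp_ineq1_le 1). lra. Qed.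

(* Completing the square: [b ln y = 2 b ln (sqrt y) <= 2 b sqrt y <= b^2/eps + eps y]. *)
Lemma Rpower_le_exp b eps : 0 < eps -> exists C, 0 < C /\
  forall y, 1 <= y -> Rpower y b <= C * exp (eps * y).
Proof.
  intros He. destruct (Rle_or_lt b 0) as [Hb|Hb].
  - exists 1. split; [lra|]. intros y Hy.
    assert (exp 0 <= exp (eps * y)) by (apply exp_le_compat; nra).
    rewrite exp_0 in H. pose proof (Rpower_le_1 y b Hy Hb). lra.
  - exists (exp (b * b / eps)). split; [apply exp_pos|]. intros y Hy.
    rewrite <- exp_plus. unfold Rpower. apply exp_le_compat.
    assert (Hs : 0 < sqrt y) by (apply sqrt_lt_R0; lra).
    assert (Hss := sqrt_sqrt y ltac:(lra)).
    assert (Hl : ln y = 2 * ln (sqrt y)).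
    { rewrite <- Hss at 1. rewrite ln_mult by auto. ring. }
    pose proof (ln_le_sub_1 (sqrt y) Hs).
    assert (b * ln y <= 2 * b * sqrt y) by nra.
    assert (2 * b * sqrt y <= b * b / eps + eps * y).
    { pose proof (Rle_0_sqr (eps * sqrt y - b)) as Hq. unfold Rsqr in Hq.
      apply Rmult_le_reg_l with eps; auto.
      replace (eps * (b * b / eps + eps * y))
        with (b * b + eps * eps * (sqrt y * sqrt y)) by (rewrite Hss; field; lra).
      nra. }
    lra.
Qed.

Lemma INR_ge_1 j : (1 <= j)%nat -> 1 <= INR j.
Proof. intros; change 1 with (INR 1); apply le_INR; auto. Qed.

Lemma INR_ge_2 j : (1 < j)%nat -> 2 <= INR j.
Proof. intros; change 2 with (INR 2); apply le_INR; lia. Qed.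

Lemma INR_pred j : (1 <= j)%nat -> INR (pred j) = INR j - 1.
Proof. intros; destruct j; [lia|]. simpl pred. rewrite S_INR; ring. Qed.

Lemma nat_floor z : 0 <= z -> exists k : nat, INR k <= z < INR k + 1.
Proof.
  intros Hz. destruct (INR_unbounded z) as [n Hn].
  induction n.
  - simpl in Hn. lra.
  - rewrite S_INR in Hn. destruct (Rlt_or_le z (INR n)) as [h|h].
    + apply IHn; lra.
    + exists n; lra.
Qed.

Lemma nat_between z : 1 <= z -> exists m : nat, (1 <= m)%nat /\ z <= INR m <= 2 * z.
Proof.
  intros Hz. destruct (nat_floor z) as [k Hk]; [lra|].
  destruct (Req_dec (INR k) z) as [e|e].
  - exists k. split; [|lra]. destruct k; simpl in e; [lra|lia].
  - exists (S k). rewrite S_INR. split; [lia|].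
    assert (INR k < z) by lra. split; [lra|]. pose proof (pos_INR k). lra.
Qed.

Lemma nat_between_half z : 1 <= z -> exists m : nat, (1 <= m)%nat /\ z / 2 <= INR m <= z.
Proof.
  intros Hz. destruct (nat_floor z) as [k Hk]; [lra|].
  exists k. destruct k.
  - simpl in Hk. lra.
  - split; [lia|]. rewrite S_INR in *. pose proof (pos_INR k). lra.
Qed.

Lemma ln_INR_eventually_ge K : exists N : nat, (1 <= N)%nat /\
  forall n, (N <= n)%nat -> K <= ln (INR n).
Proof.
  destruct (INR_unbounded (exp K)) as [N HN]. exists (S N). split; [lia|].
  intros n Hn. assert (INR N <= INR n) by (apply le_INR; lia).
  rewrite <- (ln_exp K). apply ln_le; [apply exp_pos|lra].
Qed.
(** * Partial sums and tails *)

Lemma psum_ext f g m : (forall j, (1 <= j <= m)%nat -> f j = g j) -> psum f m = psum g m.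
Proof.
  induction m; intros H; simpl; auto.
  rewrite IHm by (intros; apply H; lia). rewrite H by lia. auto.
Qed.

Lemma psum_le f g m : (forall j, (1 <= j <= m)%nat -> f j <= g j) -> psum f m <= psum g m.
Proof.
  induction m; intros H; simpl; [lra|].
  assert (psum f m <= psum g m) by (apply IHm; intros; apply H; lia).
  assert (f (S m) <= g (S m)) by (apply H; lia). lra.
Qed.

Lemma psum_const c m : psum (fun _ => c) m = INR m * c.
Proof. induction m; simpl psum; [simpl; ring|]. rewrite IHm, S_INR; ring. Qed.

Lemma psum_scal c f m : psum (fun j => c * f j) m = c * psum f m.
Proof. induction m; simpl; [ring|]. rewrite IHm; ring. Qed.

Lemma psum_1 f : psum f 1 = f 1%nat.
Proof. simpl. ring. Qed.

Lemma psum_le_psum f m M : (m <= M)%nat -> (forall j, (m < j <= M)%nat -> 0 <= f j) ->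
  psum f m <= psum f M.
Proof.
  intros Hm. induction Hm; intros H; [lra|]. simpl.
  assert (psum f m <= psum f m0) by (apply IHHm; intros; apply H; lia).
  assert (0 <= f (S m0)) by (apply H; lia). lra.
Qed.

Lemma psum_nonneg f m : (forall j, (1 <= j <= m)%nat -> 0 <= f j) -> 0 <= psum f m.
Proof. intros H. change 0 with (psum f 0). apply psum_le_psum; [lia|]. intros; apply H; lia. Qed.

Lemma psum_ge_last f m : (1 <= m)%nat -> (forall j, 0 <= f j) -> f m <= psum f m.
Proof.
  intros Hm H. destruct m; [lia|]. simpl.
  assert (0 <= psum f m) by (apply psum_nonneg; auto). lra.
Qed.

Lemma psum_diff_le_telescope f F m M : (m <= M)%nat ->
  (forall j, (m < j <= M)%nat -> f j <= F j - F (pred j)) ->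
  psum f M - psum f m <= F M - F m.
Proof.
  intros Hm. induction Hm; intros H; [lra|]. simpl psum.
  assert (psum f m0 - psum f m <= F m0 - F m) by (apply IHHm; intros; apply H; lia).
  assert (f (S m0) <= F (S m0) - F (pred (S m0))) by (apply H; lia).
  simpl pred in H1. lra.
Qed.

Lemma psum_diff_ge_telescope f F m M : (m <= M)%nat ->
  (forall j, (m < j <= M)%nat -> F j - F (pred j) <= f j) ->
  F M - F m <= psum f M - psum f m.
Proof.
  intros Hm. induction Hm; intros H; [lra|]. simpl psum.
  assert (F m0 - F m <= psum f m0 - psum f m) by (apply IHHm; intros; apply H; lia).
  assert (F (S m0) - F (pred (S m0)) <= f (S m0)) by (apply H; lia).
  simpl pred in H1. lra.
Qed.

Lemma psum_diff_le f g m M : (m <= M)%nat -> (forall j, (m < j <= M)%nat -> f j <= g j) ->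
  psum f M - psum f m <= psum g M - psum g m.
Proof.
  intros Hm H. apply psum_diff_le_telescope; auto. intros j Hj. destruct j; [lia|]. simpl.
  assert (f (S j) <= g (S j)) by (apply H; lia). lra.
Qed.

Lemma psum_diff_ge_const f c m M : (m <= M)%nat -> (forall j, (m < j <= M)%nat -> c <= f j) ->
  INR (M - m) * c <= psum f M - psum f m.
Proof.
  intros Hm. induction Hm; intros H; [rewrite Nat.sub_diag; simpl; lra|]. simpl psum.
  assert (INR (m0 - m) * c <= psum f m0 - psum f m) by (apply IHHm; intros; apply H; lia).
  assert (c <= f (S m0)) by (apply H; lia).
  replace (S m0 - m)%nat with (S (m0 - m)) by lia. rewrite S_INR. lra.
Qed.

Lemma sum_n_shift f m N :
  sum_n (fun k => f (m + 1 + k)%nat) N = psum f (m + 1 + N) - psum f m.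
Proof.
  induction N.
  - rewrite sum_O. replace (m + 1 + 0)%nat with (S m) by lia. simpl psum.
    symmetry; apply Rplus_minus_l.
  - rewrite sum_Sn, IHN. replace (m + 1 + S N)%nat with (S (m + 1 + N)) by lia.
    simpl psum. unfold plus; simpl. ring.
Qed.

(** [Series] has a junk value on divergent series: convergence of the tail comes from
    the bound on its blocks. *)
Lemma tail_bounds f m B : (forall j, (m < j)%nat -> 0 <= f j) ->
  (forall M, (m <= M)%nat -> psum f M - psum f m <= B) ->
  tail f m <= B /\ forall M, (m <= M)%nat -> psum f M - psum f m <= tail f m.
Proof.
  intros Hpos HB. set (u := sum_n (fun k => f (m + 1 + k)%nat)).
  assert (Hinc : forall N, u N <= u (S N)).
  { intros N. unfold u. rewrite !sum_n_shift.
    replace (m + 1 + S N)%nat with (S (m + 1 + N)) by lia.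
    simpl psum. assert (0 <= f (S (m + 1 + N))) by (apply Hpos; lia). lra. }
  assert (Hbd : forall N, u N <= B).
  { intros N. unfold u. rewrite sum_n_shift. apply HB; lia. }
  destruct (ex_finite_lim_seq_incr u B Hinc Hbd) as [l Hl].
  assert (Ht : tail f m = l).
  { unfold tail, Series. fold u. rewrite (is_lim_seq_unique u l Hl). reflexivity. }
  rewrite Ht. split.
  - exact (is_lim_seq_le u (fun _ => B) l B Hbd Hl (is_lim_seq_const B)).
  - intros M HM. pose proof (is_lim_seq_incr_compare u l Hl Hinc (M - m)%nat) as Hc.
    unfold u in Hc. rewrite sum_n_shift in Hc.
    assert (psum f M <= psum f (m + 1 + (M - m)))
      by (apply psum_le_psum; [lia|intros; apply Hpos; lia]).
    lra.
Qed.

Lemma tail_ext f g m : (forall j, (m < j)%nat -> f j = g j) -> tail f m = tail g m.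
Proof. intros H. unfold tail. apply Series_ext. intros k. apply H. lia. Qed.

(** * The quantities R_m and R_* *)

Definition risk (T g S : nat -> R) (x : R) (m : nat) : R :=
  Rmax (T m) (Rmax (g m) x * S m).

Lemma Rm_risk l be ga x m u w g :
  (forall j, (1 <= j)%nat -> (l j) ^ 2 / be j = u j) ->
  (forall j, (1 <= j)%nat -> (l j) ^ 2 / ga j = w j) ->
  ga m / be m = g m ->
  Rm l be ga x m = risk (tail u) g (psum w) x m.
Proof.
  intros Hu Hw Hg. unfold Rm, risk. rewrite Hg. f_equal.
  - apply tail_ext. intros; apply Hu; lia.
  - f_equal. apply psum_ext. intros; apply Hw; lia.
Qed.

Section Risk.
Variables (T g S : nat -> R) (x : R) (m : nat).

Lemma risk_ge_tail : T m <= risk T g S x m.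
Proof. apply Rmax_l. Qed.

Lemma risk_ge_var : 0 <= S m -> x * S m <= risk T g S x m.
Proof.
  intros HS. eapply Rle_trans; [|apply Rmax_r].
  apply Rmult_le_compat_r; auto. apply Rmax_r.
Qed.

Lemma risk_nonneg : 0 <= x -> 0 <= S m -> 0 <= risk T g S x m.
Proof. intros. eapply Rle_trans; [|apply risk_ge_var]; auto. nra. Qed.

Lemma risk_le B y : T m <= B -> 0 <= S m -> g m <= y -> x <= y -> y * S m <= B ->
  risk T g S x m <= B.
Proof.
  intros. apply Rmax_lub; auto. eapply Rle_trans; [|eauto].
  apply Rmult_le_compat_r; auto. apply Rmax_lub; auto.
Qed.

Lemma risk_le_sum B : T m <= B -> 0 <= S m -> 0 <= g m -> 0 <= x ->
  g m * S m + x * S m <= B -> risk T g S x m <= B.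
Proof.
  intros. apply Rmax_lub; auto. eapply Rle_trans; [|eauto].
  assert (Rmax (g m) x <= g m + x) by (apply Rmax_lub; lra). nra.
Qed.

End Risk.

Lemma Rstar_ge l be ga x b : (forall m, (1 <= m)%nat -> b <= Rm l be ga x m) ->
  b <= Rstar l be ga x.
Proof.
  intros H. unfold Rstar.
  set (E := fun y => exists m : nat, (1 <= m)%nat /\ y = Rm l be ga x m).
  destruct (Glb_Rbar_correct E) as [Hlb Hgl].
  assert (H1 : Rbar_le (Glb_Rbar E) (Rm l be ga x 1)) by (apply Hlb; exists 1%nat; auto).
  assert (H2 : Rbar_le b (Glb_Rbar E)) by (apply Hgl; intros y [m [Hm ->]]; apply H; auto).
  destruct (Glb_Rbar E); simpl in *; tauto.
Qed.

(** Nonnegativity excludes an infimum of [-oo], which [real] would turn into [0]. *)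
Lemma Rstar_le l be ga x m0 : (forall m, (1 <= m)%nat -> 0 <= Rm l be ga x m) ->
  (1 <= m0)%nat -> Rstar l be ga x <= Rm l be ga x m0.
Proof.
  intros H Hm0. unfold Rstar.
  set (E := fun y => exists m : nat, (1 <= m)%nat /\ y = Rm l be ga x m).
  destruct (Glb_Rbar_correct E) as [Hlb Hgl].
  assert (H1 : Rbar_le (Glb_Rbar E) (Rm l be ga x m0)) by (apply Hlb; exists m0; auto).
  assert (H2 : Rbar_le 0 (Glb_Rbar E)) by (apply Hgl; intros y [m [Hm ->]]; apply H; auto).
  destruct (Glb_Rbar E); simpl in *; try tauto; pose proof (H m0 Hm0); lra.
Qed.

(** [xlog L] is the regularisation parameter [(1 + log n) / n] written in terms of
    [L = log n]. *)
Definition xlog (L : R) : R := (1 + L) / exp L.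

Lemma xlog_bounds L : 1 <= L ->
  0 < xlog L <= 1 /\ L / exp L <= xlog L <= 2 * L / exp L /\ / exp L <= xlog L.
Proof.
  intros HL. pose proof (exp_pos L). pose proof (exp_ineq1_le L). unfold xlog.
  assert (0 < / exp L) by (apply Rinv_0_lt_compat; lra).
  unfold Rdiv. repeat split; try nra.
  apply Rmult_le_reg_r with (exp L); auto. rewrite Rmult_assoc, Rinv_l by lra. lra.
Qed.

Lemma Rstar_seq_xlog l be ga n : (1 <= n)%nat ->
  Rstar_seq l be ga n = Rstar l be ga (xlog (ln (INR n))).
Proof. intros Hn. unfold Rstar_seq, xlog. rewrite exp_ln; auto. apply INR_ge_1 in Hn; lra. Qed.

Lemma exp_ln_INR n : (1 <= n)%nat -> exp (ln (INR n)) = INR n.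
Proof. intros; apply exp_ln. apply INR_ge_1 in H; lra. Qed.

Definition risk_lower_bound (T g S : nat -> R) (V : R -> R) (L0 : R) : Prop :=
  exists c, 0 < c /\ forall L m, L0 <= L -> (1 <= m)%nat -> c * V L <= risk T g S (xlog L) m.

Definition risk_upper_bound (T g S : nat -> R) (V : R -> R) (L0 : R) : Prop :=
  exists C, 0 < C /\ forall L, L0 <= L ->
    exists m, (1 <= m)%nat /\ risk T g S (xlog L) m <= C * V L.

Lemma asymp_Rstar_seq l be ga T g S V W L0 :
  (forall x m, (1 <= m)%nat -> Rm l be ga x m = risk T g S x m) ->
  (forall m, (1 <= m)%nat -> 0 <= S m) ->
  (forall n, (1 <= n)%nat -> W n = V (ln (INR n))) ->
  risk_lower_bound T g S V L0 -> risk_upper_bound T g S V L0 ->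
  asymp (Rstar_seq l be ga) W.
Proof.
  intros HRm HS HW [c [Hc Hlow]] [C [HC Hup]].
  destruct (ln_INR_eventually_ge (Rmax L0 1)) as [N [HN1 HN]].
  exists c, C, N. split; [auto|]. split; [auto|].
  intros n Hn. specialize (HN n Hn).
  assert (Hn1 : (1 <= n)%nat) by lia.
  rewrite HW, Rstar_seq_xlog by auto. set (L := ln (INR n)) in *.
  assert (HL0 : L0 <= L) by (pose proof (Rmax_l L0 1); lra).
  destruct (xlog_bounds L) as [[Hx0 _] _]; [pose proof (Rmax_r L0 1); lra|].
  destruct (Hup L HL0) as [m0 [Hm0 Hm0V]]. split.
  - apply Rstar_ge. intros m Hm. rewrite HRm by auto. apply Hlow; auto.
  - eapply Rle_trans; [apply (Rstar_le _ _ _ _ m0); auto|].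
    + intros m Hm. rewrite HRm by auto. apply risk_nonneg; [lra|auto].
    + rewrite HRm; auto.
Qed.
(** * Power sums *)

Lemma ln_pred_ratio_bounds y : 1 < y -> - / (y - 1) <= ln (y - 1) - ln y <= - / y.
Proof.
  intros Hy. assert (E : ln (y - 1) - ln y = ln ((y - 1) / y)).
  { unfold Rdiv. rewrite ln_mult, ln_Rinv by (try apply Rinv_0_lt_compat; lra). ring. }
  rewrite E. assert (Hp : 0 < (y - 1) / y) by (apply Rdiv_lt_0_compat; lra).
  split.
  - pose proof (one_sub_inv_le_ln _ Hp) as H.
    replace (/ ((y - 1) / y)) with (y / (y - 1)) in H by (field; lra).
    replace (- / (y - 1)) with (1 - y / (y - 1)) by (field; lra). lra.
  - pose proof (ln_le_sub_1 _ Hp) as H.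
    replace ((y - 1) / y - 1) with (- / y) in H by (field; lra). lra.
Qed.

Lemma Rpower_pred y e : 1 < y ->
  Rpower (y - 1) e = Rpower y e * exp (e * (ln (y - 1) - ln y)).
Proof. intros. unfold Rpower. rewrite <- exp_plus. f_equal. ring. Qed.

(** The increments [y^al - (y-1)^al] are compared with the derivative [al y^(al-1)]
    through [1 + u <= e^u], applied to [(y-1)^al = y^al e^(al (ln (y-1) - ln y))]. *)
Lemma Rpower_neg_le_diff y q : 2 <= y -> 1 < q ->
  Rpower y (- q) <= (Rpower (y - 1) (1 - q) - Rpower y (1 - q)) / (q - 1).
Proof.
  intros Hy Hq. rewrite Rpower_pred by lra.
  destruct (ln_pred_ratio_bounds y ltac:(lra)) as [_ HD].
  set (D := ln (y - 1) - ln y) in *.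
  pose proof (exp_ineq1_le ((1 - q) * D)).
  assert (H2 : (q - 1) / y <= (1 - q) * D).
  { assert ((1 - q) * D >= (1 - q) * (- / y)) by nra. unfold Rdiv. lra. }
  assert (Hr : Rpower y (- q) = Rpower y (1 - q) / y).
  { rewrite <- Rpower_minus_1 by lra. f_equal; ring. }
  rewrite Hr. pose proof (Rpower_pos y (1 - q)).
  apply Rmult_le_reg_r with (q - 1); [lra|].
  unfold Rdiv at 2. rewrite Rmult_assoc, Rinv_l, Rmult_1_r by lra.
  assert (Rpower y (1 - q) * (1 + (q - 1) / y) <= Rpower y (1 - q) * exp ((1 - q) * D))
    by (apply Rmult_le_compat_l; lra).
  replace (Rpower y (1 - q) / y * (q - 1)) with (Rpower y (1 - q) * ((q - 1) / y))
    by (field; lra).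
  lra.
Qed.

Lemma Rpower_diff_ge y al : 2 <= y -> 0 < al <= 1 ->
  al / 2 * Rpower y (al - 1) <= Rpower y al - Rpower (y - 1) al.
Proof.
  intros Hy Hal. rewrite Rpower_pred by lra.
  destruct (ln_pred_ratio_bounds y ltac:(lra)) as [_ HD].
  set (D := ln (y - 1) - ln y) in *.
  assert (H1 : exp (al * D) <= exp (- (al / y))) by (apply exp_le_compat; unfold Rdiv; nra).
  rewrite exp_Ropp in H1. pose proof (exp_ineq1_le (al / y)).
  assert (Ht : 0 < al / y <= 1).
  { split; [apply Rdiv_lt_0_compat; lra|].
    apply Rmult_le_reg_r with y; [lra|]. unfold Rdiv. rewrite Rmult_assoc, Rinv_l; lra. }
  assert (H3 : / exp (al / y) <= 1 - al / y / 2).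
  { apply Rmult_le_reg_r with (exp (al / y)); [apply exp_pos|].
    rewrite Rinv_l by (apply Rgt_not_eq, exp_pos).
    assert (1 <= (1 - al / y / 2) * (1 + al / y)) by nra.
    apply Rle_trans with ((1 - al / y / 2) * (1 + al / y)); auto.
    apply Rmult_le_compat_l; lra. }
  rewrite Rpower_minus_1 by lra. pose proof (Rpower_pos y al).
  assert (Rpower y al * exp (al * D) <= Rpower y al * (1 - al / y / 2))
    by (apply Rmult_le_compat_l; lra).
  replace (al / 2 * (Rpower y al / y)) with (Rpower y al * (al / y / 2)) by (field; lra). lra.
Qed.

Lemma Rpower_diff_le y al : 2 <= y -> 0 < al ->
  Rpower y al - Rpower (y - 1) al <= 2 * al * Rpower y (al - 1).
Proof.
  intros Hy Hal. rewrite Rpower_pred by lra.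
  destruct (ln_pred_ratio_bounds y ltac:(lra)) as [HD _].
  set (D := ln (y - 1) - ln y) in *.
  pose proof (exp_ineq1_le (al * D)).
  assert (H2 : - (2 * al / y) <= al * D).
  { assert (/ (y - 1) <= 2 / y).
    { apply Rmult_le_reg_r with (y * (y - 1)); [nra|]. field_simplify; lra. }
    unfold Rdiv in *. nra. }
  rewrite Rpower_minus_1 by lra. pose proof (Rpower_pos y al).
  assert (Rpower y al * (1 - 2 * al / y) <= Rpower y al * exp (al * D))
    by (apply Rmult_le_compat_l; lra).
  replace (2 * al * (Rpower y al / y)) with (Rpower y al * (2 * al / y)) by (field; lra). lra.
Qed.

Definition jpow (r : R) (j : nat) : R := Rpower (INR j) r.

Lemma jpow_pos r j : 0 < jpow r j.
Proof. apply Rpower_pos. Qed.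

Lemma jpow_1 r : jpow r 1 = 1.
Proof. unfold jpow. simpl INR. apply Rpower_1_l. Qed.

Lemma psum_jpow_nonneg r m : 0 <= psum (jpow r) m.
Proof. apply psum_nonneg; intros; left; apply jpow_pos. Qed.

Lemma psum_jpow_ge_1 r m : (1 <= m)%nat -> 1 <= psum (jpow r) m.
Proof.
  intros Hm. rewrite <- (jpow_1 r), <- psum_1. apply psum_le_psum; auto.
  intros; left; apply jpow_pos.
Qed.

Lemma psum_jpow_ge r : -1 < r -> exists c, 0 < c /\ forall m, (1 <= m)%nat ->
  c * Rpower (INR m) (r + 1) <= psum (jpow r) m.
Proof.
  intros Hr. set (al := r + 1). assert (Hal : 0 < al) by (unfold al; lra).
  exists (Rmin 1 (/ (2 * al))). split; [apply Rmin_pos; [lra|apply Rinv_0_lt_compat; lra]|].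
  intros m Hm.
  assert (H := psum_diff_ge_telescope (jpow r) (fun j => Rpower (INR j) al / (2 * al)) 1 m Hm).
  assert (H' : forall j, (1 < j <= m)%nat ->
    Rpower (INR j) al / (2 * al) - Rpower (INR (pred j)) al / (2 * al) <= jpow r j).
  { intros j Hj. rewrite INR_pred by lia.
    pose proof (Rpower_diff_le (INR j) al (INR_ge_2 j ltac:(lia)) Hal).
    unfold jpow. replace (al - 1) with r in H0 by (unfold al; ring).
    apply Rmult_le_reg_r with (2 * al); [lra|]. field_simplify; lra. }
  specialize (H H'). rewrite psum_1, jpow_1 in H. simpl INR in H. rewrite Rpower_1_l in H.
  set (Y := Rpower (INR m) al) in *.
  assert (HY : 1 <= Y) by (apply Rpower_ge_1; [apply INR_ge_1|]; lia || lra).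
  set (k := / (2 * al)) in *. assert (Hk : 0 < k) by (unfold k; apply Rinv_0_lt_compat; lra).
  assert (Y / (2 * al) = Y * k) by (unfold k; field; lra).
  assert (1 / (2 * al) = k) by (unfold k; field; lra).
  destruct (Rle_or_lt 1 k).
  - rewrite Rmin_left by lra. nra.
  - rewrite Rmin_right by lra. nra.
Qed.

Lemma psum_jpow_le r : -1 < r -> exists C, 0 < C /\ forall m, (1 <= m)%nat ->
  psum (jpow r) m <= C * Rpower (INR m) (r + 1).
Proof.
  intros Hr. destruct (Rle_or_lt 0 r) as [H0|H0].
  - exists 1. split; [lra|]. intros m Hm.
    apply Rle_trans with (psum (fun _ => Rpower (INR m) r) m).
    + apply psum_le. intros j Hj. unfold jpow. apply Rpower_le_base; auto.
      * assert (1 <= INR j) by (apply INR_ge_1; lia); lra.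
      * apply le_INR; lia.
    + rewrite psum_const, Rpower_plus_1; [lra|]. apply INR_ge_1 in Hm; lra.
  - set (al := r + 1). assert (Hal : 0 < al <= 1) by (unfold al; lra).
    assert (Hi : 0 < 2 / al) by (apply Rdiv_lt_0_compat; lra).
    exists (1 + 2 / al). split; [lra|].
    intros m Hm.
    assert (H := psum_diff_le_telescope (jpow r) (fun j => 2 / al * Rpower (INR j) al) 1 m Hm).
    assert (H' : forall j, (1 < j <= m)%nat ->
      jpow r j <= 2 / al * Rpower (INR j) al - 2 / al * Rpower (INR (pred j)) al).
    { intros j Hj. rewrite INR_pred by lia.
      pose proof (Rpower_diff_ge (INR j) al (INR_ge_2 j ltac:(lia)) Hal) as Ht.
      unfold jpow. replace (al - 1) with r in Ht by (unfold al; ring).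
      rewrite <- Rmult_minus_distr_l.
      replace (Rpower (INR j) r) with (2 / al * (al / 2 * Rpower (INR j) r)) by (field; lra).
      apply Rmult_le_compat_l; lra. }
    specialize (H H'). rewrite psum_1, jpow_1 in H. simpl INR in H. rewrite Rpower_1_l in H.
    set (Y := Rpower (INR m) al) in *.
    assert (HY : 1 <= Y) by (apply Rpower_ge_1; [apply INR_ge_1|]; lia || lra).
    nra.
Qed.

Lemma psum_harmonic_le m : (1 <= m)%nat -> psum (jpow (-1)) m <= 1 + ln (INR m).
Proof.
  intros Hm. assert (H := psum_diff_le_telescope (jpow (-1)) (fun j => ln (INR j)) 1 m Hm).
  assert (H' : forall j, (1 < j <= m)%nat -> jpow (-1) j <= ln (INR j) - ln (INR (pred j))).
  { intros j Hj. pose proof (INR_ge_2 j ltac:(lia)). rewrite INR_pred by lia.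
    unfold jpow. rewrite Rpower_m1 by lra.
    destruct (ln_pred_ratio_bounds (INR j)); lra. }
  specialize (H H'). rewrite psum_1, jpow_1 in H. simpl INR in H. rewrite ln_1 in H. lra.
Qed.

Lemma psum_harmonic_ge m : (1 <= m)%nat -> ln (INR m + 1) <= psum (jpow (-1)) m.
Proof.
  intros Hm.
  assert (H := psum_diff_ge_telescope (jpow (-1)) (fun j => ln (INR j + 1)) 0 m ltac:(lia)).
  assert (H' : forall j, (0 < j <= m)%nat ->
    ln (INR j + 1) - ln (INR (pred j) + 1) <= jpow (-1) j).
  { intros j Hj. pose proof (INR_ge_1 j ltac:(lia)). rewrite INR_pred by lia.
    replace (INR j - 1 + 1) with (INR j) by ring.
    unfold jpow. rewrite Rpower_m1 by lra.
    destruct (ln_pred_ratio_bounds (INR j + 1)) as [Hl _]; [lra|].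
    replace (INR j + 1 - 1) with (INR j) in Hl by ring. lra. }
  specialize (H H'). cbv beta in H. simpl INR in H. simpl psum in H.
  replace (0 + 1) with 1 in H by ring. rewrite ln_1 in H. lra.
Qed.

Lemma psum_jpow_diff_le q m M : 1 < q -> (1 <= m <= M)%nat ->
  psum (jpow (- q)) M - psum (jpow (- q)) m <= Rpower (INR m) (1 - q) / (q - 1).
Proof.
  intros Hq Hm.
  assert (H := psum_diff_le_telescope (jpow (- q))
    (fun j => - Rpower (INR j) (1 - q) / (q - 1)) m M ltac:(lia)).
  assert (H' : forall j, (m < j <= M)%nat -> jpow (- q) j <=
    - Rpower (INR j) (1 - q) / (q - 1) - - Rpower (INR (pred j)) (1 - q) / (q - 1)).
  { intros j Hj. rewrite INR_pred by lia.
    pose proof (Rpower_neg_le_diff (INR j) q (INR_ge_2 j ltac:(lia)) Hq).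
    unfold jpow.
    replace (- Rpower (INR j) (1 - q) / (q - 1) - - Rpower (INR j - 1) (1 - q) / (q - 1))
      with ((Rpower (INR j - 1) (1 - q) - Rpower (INR j) (1 - q)) / (q - 1)) by (field; lra).
    auto. }
  specialize (H H'). pose proof (Rpower_pos (INR M) (1 - q)).
  assert (0 < / (q - 1)) by (apply Rinv_0_lt_compat; lra). unfold Rdiv in *. nra.
Qed.

Lemma psum_jpow_bounded r m : r < -1 -> (1 <= m)%nat -> psum (jpow r) m <= 1 + / (- r - 1).
Proof.
  intros Hr Hm. pose proof (psum_jpow_diff_le (- r) 1 m ltac:(lra) ltac:(lia)) as H.
  rewrite Ropp_involutive, psum_1, jpow_1 in H. simpl INR in H.
  rewrite Rpower_1_l in H. unfold Rdiv in H. lra.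
Qed.

Lemma tail_jpow_bounds q m : 1 < q -> (1 <= m)%nat ->
  Rpower 2 (- q) * Rpower (INR m) (1 - q) <= tail (jpow (- q)) m /\
  tail (jpow (- q)) m <= Rpower (INR m) (1 - q) / (q - 1).
Proof.
  intros Hq Hm. pose proof (INR_ge_1 m Hm).
  destruct (tail_bounds (jpow (- q)) m (Rpower (INR m) (1 - q) / (q - 1))) as [H1 H2].
  - intros; left; apply jpow_pos.
  - intros M HM. apply psum_jpow_diff_le; auto.
  - split; auto. eapply Rle_trans; [|apply (H2 (2 * m)%nat); lia].
    eapply Rle_trans; [|apply (psum_diff_ge_const _ (Rpower (INR (2 * m)) (- q))); [lia|]].
    + replace (2 * m - m)%nat with m by lia. rewrite mult_INR. simpl (INR 2).
      rewrite <- Rpower_mult_distr by lra.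
      replace (1 - q) with (- q + 1) by ring. rewrite <- Rpower_plus_1 by lra.
      replace (1 + 1) with 2 by ring. right; ring.
    + intros j Hj. pose proof (INR_ge_1 j ltac:(lia)). unfold jpow.
      apply Rpower_le_base_neg; [lra|lra|apply le_INR; lia].
Qed.

(** * Polynomial beta and gamma *)

Lemma risk_pow_xlog_lower T g S e : 0 <= e ->
  (exists c, 0 < c /\ forall x m, 0 < x <= 1 -> (1 <= m)%nat ->
     c * Rpower x e <= risk T g S x m) ->
  risk_lower_bound T g S (fun L => Rpower (L / exp L) e) 1.
Proof.
  intros He [c [Hc Hlow]]. exists c. split; auto. intros L m HL Hm.
  destruct (xlog_bounds L HL) as [Hx [[HxL _] _]].
  eapply Rle_trans; [|apply Hlow; auto]. apply Rmult_le_compat_l; [lra|].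
  apply Rpower_le_base; auto. apply Rdiv_lt_0_compat; [lra|apply exp_pos].
Qed.

Lemma risk_pow_xlog_upper T g S e : 0 <= e ->
  (exists C, 0 < C /\ forall x, 0 < x <= 1 ->
     exists m, (1 <= m)%nat /\ risk T g S x m <= C * Rpower x e) ->
  risk_upper_bound T g S (fun L => Rpower (L / exp L) e) 1.
Proof.
  intros He [C [HC Hup]]. exists (C * Rpower 2 e). split; [pose proof (Rpower_pos 2 e); nra|].
  intros L HL. destruct (xlog_bounds L HL) as [Hx [[HxL HxU] _]].
  destruct (Hup (xlog L) Hx) as [m [Hm Hrisk]]. exists m. split; auto.
  eapply Rle_trans; [apply Hrisk|]. rewrite Rmult_assoc. apply Rmult_le_compat_l; [lra|].
  rewrite Rpower_mult_distr by (try apply Rdiv_lt_0_compat; try apply exp_pos; lra).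
  apply Rpower_le_base; auto; [lra|]. unfold Rdiv in *; lra.
Qed.

Lemma nat_near_exp d L : 0 < d -> 0 <= L -> exists m, (1 <= m)%nat /\
  Rpower (INR m) (- d) <= / exp L /\ ln (INR m) <= ln 2 + L / d.
Proof.
  intros Hd HL. set (z := exp (L / d)).
  assert (Hz : 1 <= z).
  { unfold z. rewrite <- exp_0. apply exp_le_compat, Rmult_le_pos; [lra|].
    left; apply Rinv_0_lt_compat; lra. }
  pose proof (exp_pos (L / d)).
  destruct (nat_between z Hz) as [m [Hm Hzm]]. exists m. split; [auto|split].
  - rewrite <- exp_Ropp. replace (- L) with (- d * (L / d)) by (field; lra).
    rewrite <- Rpower_exp. fold z. apply Rpower_le_base_neg; lra.
  - replace (L / d) with (ln z) by (unfold z; rewrite ln_exp; auto).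
    rewrite <- ln_mult by lra. apply ln_le; lra.
Qed.

Section PolynomialPolynomial.
Variables q r : R.
Hypothesis Hq : 1 < q.

Let Tpp := tail (jpow (- q)).
Let gpp := jpow (- (q + r)).
Let Spp := psum (jpow r).

Lemma pp_subcritical_lower : -1 < r -> exists c, 0 < c /\ forall x m, 0 < x <= 1 ->
  (1 <= m)%nat -> c * Rpower x ((q - 1) / (q + r)) <= risk Tpp gpp Spp x m.
Proof.
  intros Hr. destruct (psum_jpow_ge r Hr) as [cS [HcS Hlow]].
  set (d := q + r). assert (Hd : 0 < d) by (unfold d; lra).
  assert (Hid : 0 < / d) by (apply Rinv_0_lt_compat; lra).
  set (e := (q - 1) / d).
  exists (Rmin (Rpower 2 (- q)) cS). split; [apply Rmin_pos; auto; apply Rpower_pos|].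
  intros x m Hx Hm. set (M := INR m). assert (HM : 1 <= M) by (apply INR_ge_1; auto).
  pose proof (Rpower_pos x e). pose proof (Rmin_l (Rpower 2 (- q)) cS).
  pose proof (Rmin_r (Rpower 2 (- q)) cS).
  assert (Hc0 : 0 < Rmin (Rpower 2 (- q)) cS) by (apply Rmin_pos; auto; apply Rpower_pos).
  destruct (Rle_or_lt (Rpower M d) (/ x)) as [Hc|Hc].
  - eapply Rle_trans; [|apply risk_ge_tail].
    destruct (tail_jpow_bounds q m Hq Hm) as [HT _]. fold M in HT.
    eapply Rle_trans; [|apply HT].
    assert (E : Rpower M (1 - q) = Rpower (Rpower M d) ((1 - q) / d)).
    { rewrite Rpower_mult. f_equal. field. lra. }
    assert (Rpower x e <= Rpower M (1 - q)).
    { rewrite E. replace e with (- ((1 - q) / d)) by (unfold e; field; lra).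
      rewrite <- Rpower_inv by lra.
      apply Rpower_le_base_neg; [unfold Rdiv; nra|apply Rpower_pos|auto]. }
    pose proof (Rpower_pos 2 (- q)). apply Rmult_le_compat; lra.
  - eapply Rle_trans; [|apply risk_ge_var, psum_jpow_nonneg].
    specialize (Hlow m Hm). fold M in Hlow.
    assert (He1 : Rpower x e = x * Rpower x (- ((r + 1) / d))).
    { rewrite <- (Rpower_1 x) at 2 by lra. rewrite <- Rpower_plus. f_equal.
      unfold e, d. field. lra. }
    assert (E : Rpower M (r + 1) = Rpower (Rpower M d) ((r + 1) / d)).
    { rewrite Rpower_mult. f_equal. field. lra. }
    assert (Rpower x (- ((r + 1) / d)) <= Rpower M (r + 1)).
    { rewrite E, <- Rpower_inv by lra.
      apply Rpower_le_base; [unfold Rdiv; nra|apply Rinv_0_lt_compat; lra|lra]. }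
    rewrite He1. pose proof (Rpower_pos x (- ((r + 1) / d))).
    assert (Rmin (Rpower 2 (- q)) cS * Rpower x (- ((r + 1) / d)) <= cS * Rpower M (r + 1))
      by (apply Rmult_le_compat; lra).
    unfold Spp. nra.
Qed.

(** The balance point: [m ~ z := x^(-1/(q+r))], where [gpp m ~ x]. *)
Lemma pp_subcritical_upper : -1 < r -> exists C, 0 < C /\ forall x, 0 < x <= 1 ->
  exists m, (1 <= m)%nat /\ risk Tpp gpp Spp x m <= C * Rpower x ((q - 1) / (q + r)).
Proof.
  intros Hr. destruct (psum_jpow_le r Hr) as [CS [HCS Hup]].
  set (d := q + r). assert (Hd : 0 < d) by (unfold d; lra).
  set (e := (q - 1) / d).
  assert (Hiq : 0 < / (q - 1)) by (apply Rinv_0_lt_compat; lra).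
  pose proof (Rpower_pos 2 (r + 1)).
  exists (/ (q - 1) + CS * Rpower 2 (r + 1)). split; [nra|].
  intros x Hx. set (z := Rpower x (- / d)).
  assert (Hz : 1 <= z).
  { unfold z. rewrite <- Rpower_inv by lra. apply Rpower_ge_1.
    - rewrite <- Rinv_1. apply Rinv_le_contravar; lra.
    - left; apply Rinv_0_lt_compat; lra. }
  destruct (nat_between z Hz) as [m0 [Hm0 Hzm]]. exists m0. split; auto.
  set (M := INR m0) in *. pose proof (Rpower_pos x e).
  apply risk_le with (y := x).
  - destruct (tail_jpow_bounds q m0 Hq Hm0) as [_ HT]. fold M in HT.
    eapply Rle_trans; [apply HT|].
    assert (Rpower M (1 - q) <= Rpower z (1 - q)) by (apply Rpower_le_base_neg; lra).
    assert (Rpower z (1 - q) = Rpower x e).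
    { unfold z. rewrite Rpower_mult. f_equal. unfold e. field. lra. }
    assert (Rpower M (1 - q) * / (q - 1) <= Rpower x e * / (q - 1))
      by (apply Rmult_le_compat_r; lra).
    assert (0 <= CS * Rpower 2 (r + 1) * Rpower x e)
      by (apply Rmult_le_pos; [apply Rmult_le_pos|]; lra).
    unfold Rdiv. nra.
  - apply psum_jpow_nonneg.
  - assert (Rpower M (- d) <= Rpower z (- d)) by (apply Rpower_le_base_neg; lra).
    assert (Rpower z (- d) = x).
    { unfold z. rewrite Rpower_mult. rewrite <- (Rpower_1 x) at 2 by lra. f_equal. field. lra. }
    change (Rpower M (- d) <= x). lra.
  - lra.
  - specialize (Hup m0 Hm0). fold M in Hup.
    assert (HMz : Rpower M (r + 1) <= Rpower (2 * z) (r + 1)) by (apply Rpower_le_base; lra).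
    rewrite <- Rpower_mult_distr in HMz by lra.
    assert (x * Rpower z (r + 1) = Rpower x e).
    { unfold z. rewrite Rpower_mult. rewrite <- (Rpower_1 x) at 1 by lra.
      rewrite <- Rpower_plus. f_equal. unfold e, d. field. lra. }
    pose proof (Rpower_pos z (r + 1)).
    assert (x * Spp m0 <= x * (CS * (Rpower 2 (r + 1) * Rpower z (r + 1)))).
    { apply Rmult_le_compat_l; [lra|]. eapply Rle_trans; [apply Hup|].
      apply Rmult_le_compat_l; lra. }
    nra.
Qed.

Lemma pp_critical_lower : r = -1 -> risk_lower_bound Tpp gpp Spp (fun L => L ^ 2 / exp L) 1.
Proof.
  intros Hr. set (d := q - 1). assert (Hd : 0 < d) by (unfold d; lra).
  destruct (Rpower_le_exp 2 (/ 2) ltac:(lra)) as [Cp [HCp Hsq]].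
  exists (Rmin (Rpower 2 (- q) / Cp) (/ (2 * d))).
  split; [apply Rmin_pos; [apply Rdiv_lt_0_compat; [apply Rpower_pos|lra]|]|].
  { apply Rinv_0_lt_compat; lra. }
  intros L m HL Hm. destruct (xlog_bounds L HL) as [[Hx0 Hx1] [[HxL HxU] Hxi]].
  pose proof (exp_pos L) as HeL.
  set (M := INR m). assert (HM : 1 <= M) by (apply INR_ge_1; auto).
  assert (HL2 : 0 <= L ^ 2 / exp L) by (apply Rlt_le, Rdiv_lt_0_compat; nra).
  destruct (Rle_or_lt (d * ln M) (L / 2)) as [Hc|Hc].
  - eapply Rle_trans; [|apply risk_ge_tail].
    destruct (tail_jpow_bounds q m Hq Hm) as [HT _]. fold M in HT.
    eapply Rle_trans; [|apply HT].
    assert (E : Rpower M (1 - q) = exp (- (d * ln M))) by (unfold Rpower, d; f_equal; ring).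
    assert (Hhalf : exp (L / 2) / exp L <= Rpower M (1 - q))
      by (rewrite E, exp_half; apply exp_le_compat; lra).
    specialize (Hsq L HL). replace 2 with (INR 2) in Hsq at 1 by (simpl; ring).
    rewrite Rpower_pow in Hsq by lra. replace (/ 2 * L) with (L / 2) in Hsq by field.
    assert (L ^ 2 / exp L <= Cp * (exp (L / 2) / exp L)).
    { unfold Rdiv. rewrite <- Rmult_assoc.
      apply Rmult_le_compat_r; [apply Rlt_le, Rinv_0_lt_compat; lra|auto]. }
    pose proof (Rmin_l (Rpower 2 (- q) / Cp) (/ (2 * d))). pose proof (Rpower_pos 2 (- q)).
    apply Rle_trans with (Rpower 2 (- q) / Cp * (L ^ 2 / exp L)).
    { apply Rmult_le_compat_r; auto. }
    apply Rle_trans with (Rpower 2 (- q) / Cp * (Cp * (exp (L / 2) / exp L))).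
    { apply Rmult_le_compat_l; auto. apply Rlt_le, Rdiv_lt_0_compat; lra. }
    replace (Rpower 2 (- q) / Cp * (Cp * (exp (L / 2) / exp L)))
      with (Rpower 2 (- q) * (exp (L / 2) / exp L)) by (field; lra).
    apply Rmult_le_compat_l; lra.
  - eapply Rle_trans; [|apply risk_ge_var, psum_jpow_nonneg].
    unfold Spp. rewrite Hr. pose proof (psum_harmonic_ge m Hm). fold M in H.
    assert (ln M <= ln (M + 1)) by (apply ln_le; lra).
    assert (L / (2 * d) <= ln M).
    { apply Rmult_le_reg_r with (2 * d); [lra|]. unfold Rdiv.
      rewrite Rmult_assoc, Rinv_l by lra. lra. }
    assert (L ^ 2 / exp L * / (2 * d) <= xlog L * psum (jpow (-1)) m).
    { replace (L ^ 2 / exp L * / (2 * d)) with (L / exp L * (L / (2 * d))) by (field; lra).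
      apply Rmult_le_compat; try lra; apply Rlt_le, Rdiv_lt_0_compat; lra. }
    pose proof (Rmin_r (Rpower 2 (- q) / Cp) (/ (2 * d))).
    eapply Rle_trans; [|apply H2]. rewrite Rmult_comm. apply Rmult_le_compat_l; auto.
Qed.

Lemma pp_critical_upper : r = -1 -> risk_upper_bound Tpp gpp Spp (fun L => L ^ 2 / exp L) 1.
Proof.
  intros Hr. set (d := q - 1). assert (Hd : 0 < d) by (unfold d; lra).
  assert (Hid : 0 < / d) by (apply Rinv_0_lt_compat; lra).
  exists (/ d + 2 * (2 + / d)). split; [lra|].
  intros L HL. destruct (xlog_bounds L HL) as [[Hx0 Hx1] [[HxL HxU] Hxi]].
  pose proof (exp_pos L) as HeL.
  destruct (nat_near_exp d L Hd ltac:(lra)) as [m0 [Hm0 [HMd HlnM]]]. exists m0. split; auto.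
  set (M := INR m0) in *. assert (Hie : 0 < / exp L) by (apply Rinv_0_lt_compat; lra).
  assert (HL2 : / exp L <= L ^ 2 / exp L).
  { unfold Rdiv. rewrite <- (Rmult_1_l (/ exp L)) at 1.
    apply Rmult_le_compat_r; [apply Rlt_le, Rinv_0_lt_compat; lra|nra]. }
  apply risk_le with (y := xlog L).
  - destruct (tail_jpow_bounds q m0 Hq Hm0) as [_ HT]. fold M in HT.
    eapply Rle_trans; [apply HT|]. replace (1 - q) with (- d) by (unfold d; ring).
    assert (Rpower M (- d) / d <= / d * (L ^ 2 / exp L)).
    { unfold Rdiv at 1. rewrite Rmult_comm. apply Rmult_le_compat_l; lra. }
    assert (0 <= 2 * (2 + / d) * (L ^ 2 / exp L)) by (apply Rmult_le_pos; lra).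
    unfold d in *. lra.
  - apply psum_jpow_nonneg.
  - change (Rpower M (- (q + r)) <= xlog L). replace (- (q + r)) with (- d) by (unfold d; lra).
    lra.
  - lra.
  - unfold Spp. rewrite Hr. pose proof (psum_harmonic_le m0 Hm0). fold M in H.
    pose proof ln_2_le_1.
    assert (L / d = L * / d) by (unfold Rdiv; auto).
    assert (0 <= psum (jpow (-1)) m0 <= (2 + / d) * L) by (split; [apply psum_jpow_nonneg|nra]).
    apply Rle_trans with (2 * L / exp L * ((2 + / d) * L)); [apply Rmult_le_compat; lra|].
    replace (2 * L / exp L * ((2 + / d) * L)) with (2 * (2 + / d) * (L ^ 2 / exp L))
      by (field; lra).
    assert (0 <= / d * (L ^ 2 / exp L)) by (apply Rmult_le_pos; lra).
    lra.
Qed.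

Lemma pp_supercritical_lower : r < -1 -> risk_lower_bound Tpp gpp Spp (fun L => L / exp L) 1.
Proof.
  intros Hr. exists 1. split; [lra|]. intros L m HL Hm.
  destruct (xlog_bounds L HL) as [_ [[HxL _] _]].
  eapply Rle_trans; [|apply risk_ge_var, psum_jpow_nonneg].
  pose proof (psum_jpow_ge_1 r m Hm). pose proof (exp_pos L).
  assert (0 <= L / exp L) by (apply Rlt_le, Rdiv_lt_0_compat; lra).
  unfold Spp. nra.
Qed.

Lemma pp_supercritical_upper : r < -1 -> 0 < q + r ->
  risk_upper_bound Tpp gpp Spp (fun L => L / exp L) 1.
Proof.
  intros Hr Hd. set (CS := 1 + / (- r - 1)).
  assert (HCS : 0 < CS)
    by (unfold CS; assert (0 < / (- r - 1)) by (apply Rinv_0_lt_compat; lra); lra).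
  assert (Hiq : 0 < / (q - 1)) by (apply Rinv_0_lt_compat; lra).
  exists (/ (q - 1) + 2 * CS). split; [lra|].
  intros L HL. destruct (xlog_bounds L HL) as [[Hx0 Hx1] [[HxL HxU] Hxi]].
  pose proof (exp_pos L) as HeL.
  destruct (nat_near_exp (q + r) L Hd ltac:(lra)) as [m0 [Hm0 [HMd _]]]. exists m0. split; auto.
  set (M := INR m0) in *. assert (Hie : 0 < / exp L) by (apply Rinv_0_lt_compat; lra).
  assert (HL2 : / exp L <= L / exp L).
  { unfold Rdiv. rewrite <- (Rmult_1_l (/ exp L)) at 1.
    apply Rmult_le_compat_r; [apply Rlt_le, Rinv_0_lt_compat|]; lra. }
  apply risk_le with (y := xlog L).
  - destruct (tail_jpow_bounds q m0 Hq Hm0) as [_ HT]. fold M in HT.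
    eapply Rle_trans; [apply HT|].
    assert (Rpower M (1 - q) <= Rpower M (- (q + r)))
      by (apply Rle_Rpower; [apply INR_ge_1; auto|lra]).
    assert (Rpower M (1 - q) / (q - 1) <= / (q - 1) * (L / exp L)).
    { unfold Rdiv at 1. rewrite Rmult_comm. apply Rmult_le_compat_l; lra. }
    assert (0 <= 2 * CS * (L / exp L)) by (apply Rmult_le_pos; lra).
    lra.
  - apply psum_jpow_nonneg.
  - change (Rpower M (- (q + r)) <= xlog L). lra.
  - lra.
  - unfold Spp. pose proof (psum_jpow_bounded r m0 Hr Hm0). fold CS in H.
    apply Rle_trans with (2 * L / exp L * CS).
    { apply Rmult_le_compat; try lra. apply psum_jpow_nonneg. }
    replace (2 * L / exp L * CS) with (2 * CS * (L / exp L)) by (field; lra).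
    assert (0 <= / (q - 1) * (L / exp L)) by (apply Rmult_le_pos; lra).
    lra.
Qed.

End PolynomialPolynomial.

Lemma Rstar_polynomial_polynomial (p a s : R) (l : nat -> R) :
  0 < p -> 1/2 < a -> 3/2 <= p + a -> 1/2 - p < s ->
  (forall j : nat, (1 <= j)%nat -> (l j) ^ 2 = Rpower (INR j) (- (2 * s))) ->
  let beta := fun j : nat => Rpower (INR j) (2 * p) in
  let gamma := fun j : nat => Rpower (INR j) (- (2 * a)) in
  (s - a < 1/2 ->
     asymp (Rstar_seq l beta gamma)
       (fun n => Rpower (ln (INR n) / INR n) ((2*p + 2*s - 1) / (2*p + 2*a)))) /\
  (s - a = 1/2 ->
     asymp (Rstar_seq l beta gamma) (fun n => (ln (INR n)) ^ 2 / INR n)) /\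
  (s - a > 1/2 ->
     asymp (Rstar_seq l beta gamma) (fun n => ln (INR n) / INR n)).
Proof.
  intros Hp Ha Hpa Hs Hl beta gamma.
  set (q := 2 * s + 2 * p). set (r := 2 * a - 2 * s).
  assert (Hq : 1 < q) by (unfold q; lra).
  assert (HRm : forall x m, (1 <= m)%nat ->
    Rm l beta gamma x m = risk (tail (jpow (- q))) (jpow (- (q + r))) (psum (jpow r)) x m).
  { intros x m Hm. apply Rm_risk; [intros j Hj..|];
      try rewrite Hl by auto; unfold beta, gamma, jpow;
      rewrite Rpower_div by (apply INR_ge_1 in Hj || apply INR_ge_1 in Hm; lra);
      f_equal; unfold q, r; ring. }
  assert (HS : forall m, (1 <= m)%nat -> 0 <= psum (jpow r) m)
    by (intros; apply psum_jpow_nonneg).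
  split; [|split]; intros Hsa.
  - assert (Hr : -1 < r) by (unfold r; lra).
    assert (He : (q - 1) / (q + r) = (2*p + 2*s - 1) / (2*p + 2*a)) by (unfold q, r; field; lra).
    assert (He0 : 0 <= (2*p + 2*s - 1) / (2*p + 2*a))
      by (apply Rlt_le, Rdiv_lt_0_compat; lra).
    destruct (pp_subcritical_lower q r Hq Hr) as [c [Hc Hlow]].
    destruct (pp_subcritical_upper q r Hq Hr) as [C [HC Hup]].
    rewrite He in Hlow, Hup.
    apply (asymp_Rstar_seq _ _ _ _ _ _
      (fun L => Rpower (L / exp L) ((2*p + 2*s - 1) / (2*p + 2*a))) _ 1 HRm HS).
    + intros n Hn. rewrite exp_ln_INR; auto.
    + apply risk_pow_xlog_lower; eauto.
    + apply risk_pow_xlog_upper; eauto.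
  - assert (Hr : r = -1) by (unfold r; lra).
    apply (asymp_Rstar_seq _ _ _ _ _ _ (fun L => L ^ 2 / exp L) _ 1 HRm HS).
    + intros n Hn. rewrite exp_ln_INR; auto.
    + apply pp_critical_lower; auto.
    + apply pp_critical_upper; auto.
  - assert (Hr : r < -1) by (unfold r; lra).
    apply (asymp_Rstar_seq _ _ _ _ _ _ (fun L => L / exp L) _ 1 HRm HS).
    + intros n Hn. rewrite exp_ln_INR; auto.
    + apply pp_supercritical_lower; auto.
    + apply pp_supercritical_upper; unfold q, r; auto; lra.
Qed.

(** * Polynomial beta, exponential gamma *)

Lemma Rpower_exp_quasi_increasing b c : 0 < c -> exists K, 0 < K /\ forall y z, 1 <= y <= z ->
  Rpower y b * exp (Rpower y c) <= K * (Rpower z b * exp (Rpower z c)).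
Proof.
  intros Hc. destruct (Rle_or_lt 0 b) as [Hb|Hb].
  - exists 1. split; [lra|]. intros y z Hyz. rewrite Rmult_1_l.
    apply Rmult_le_compat; try (left; apply Rpower_pos); try (left; apply exp_pos).
    + apply Rpower_le_base; lra.
    + apply exp_le_compat. apply Rpower_le_base; lra.
  - set (e := - b / c). assert (He : 0 < e) by (unfold e; apply Rdiv_lt_0_compat; lra).
    destruct (Rpower_le_exp e 1 ltac:(lra)) as [C [HC HP]].
    exists (C * exp 1). split; [pose proof (exp_pos 1); nra|]. intros y z Hyz.
    set (J := Rpower y c). set (M := Rpower z c).
    assert (HJ : 1 <= J) by (apply Rpower_ge_1; lra).
    assert (HJM : J <= M) by (apply Rpower_le_base; lra).
    assert (Ey : Rpower y b = / Rpower J e).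
    { rewrite <- Rpower_Ropp. unfold J. rewrite Rpower_mult. f_equal. unfold e. field. lra. }
    assert (Ez : Rpower z b = / Rpower M e).
    { rewrite <- Rpower_Ropp. unfold M. rewrite Rpower_mult. f_equal. unfold e. field. lra. }
    rewrite Ey, Ez.
    assert (H1 : M <= J * (1 + (M - J))) by nra.
    assert (H2 : Rpower M e <= Rpower J e * Rpower (1 + (M - J)) e).
    { rewrite Rpower_mult_distr by lra. apply Rpower_le_base; lra. }
    specialize (HP (1 + (M - J)) ltac:(lra)). rewrite Rmult_1_l in HP.
    assert (H3 : exp (1 + (M - J)) = exp 1 * exp M / exp J).
    { replace (1 + (M - J)) with (1 + M + - J) by ring. rewrite !exp_plus, exp_Ropp. field.
      apply Rgt_not_eq, exp_pos. }
    rewrite H3 in HP.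
    pose proof (Rpower_pos J e). pose proof (Rpower_pos M e). pose proof (exp_pos J).
    pose proof (exp_pos M). pose proof (exp_pos 1). pose proof (Rpower_pos (1 + (M - J)) e).
    assert (HMJ : Rpower M e <= Rpower J e * (C * (exp 1 * exp M / exp J))).
    { eapply Rle_trans; [apply H2|]. apply Rmult_le_compat_l; lra. }
    apply Rmult_le_reg_r with (Rpower M e * Rpower J e); [nra|].
    replace (/ Rpower J e * exp J * (Rpower M e * Rpower J e))
      with (Rpower M e * exp J) by (field; lra).
    replace (C * exp 1 * (/ Rpower M e * exp M) * (Rpower M e * Rpower J e))
      with (Rpower J e * (C * (exp 1 * exp M / exp J)) * exp J) by (field; lra).
    apply Rmult_le_compat_r; lra.
Qed.

(** In case (pe), [expw s a j = [l]_j^2 / gamma_j]. *)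
Definition expw (s a : R) (j : nat) : R :=
  Rpower (INR j) (- (2 * s)) * exp (Rpower (INR j) (2 * a) - 1).

Section PolynomialExponential.
Variables p a s : R.
Hypotheses (Hp : 0 < p) (Ha : 0 < a) (Hq : 1 < 2 * s + 2 * p).

Let q := 2 * s + 2 * p.
Let k := (q - 1) / (2 * a).
Let Tpe := tail (jpow (- q)).
Let gpe (m : nat) : R := exp (- Rpower (INR m) (2 * a) + 1) / Rpower (INR m) (2 * p).
Let Spe := psum (expw s a).

Lemma expw_pos j : 0 < expw s a j.
Proof. apply Rmult_lt_0_compat; [apply Rpower_pos|apply exp_pos]. Qed.

Lemma psum_expw_nonneg m : 0 <= psum (expw s a) m.
Proof. apply psum_nonneg; intros; left; apply expw_pos. Qed.

Lemma xlog_Rpower_exp_half_bounded b : exists C, 0 < C /\ forall L, 1 <= L ->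
  xlog L * (Rpower L b * exp (L / 2)) <= C.
Proof.
  destruct (Rpower_le_exp (b + 1) (/ 2) ltac:(lra)) as [C [HC HP]].
  exists (2 * C). split; [lra|]. intros L HL. specialize (HP L HL).
  destruct (xlog_bounds L HL) as [[Hx0 _] [[_ HxU] _]].
  rewrite <- Rpower_plus_1 in HP by lra. replace (/ 2 * L) with (L / 2) in HP by field.
  pose proof (exp_pos L). pose proof (exp_pos (L / 2)). pose proof (Rpower_pos L b).
  apply Rle_trans with (2 * L / exp L * (Rpower L b * exp (L / 2))).
  { apply Rmult_le_compat_r; nra. }
  replace (2 * L / exp L * (Rpower L b * exp (L / 2)))
    with (2 * (L * Rpower L b) * (exp (L / 2) / exp L)) by (field; lra).
  rewrite exp_half, exp_Ropp.
  apply Rle_trans with (2 * (C * exp (L / 2)) * / exp (L / 2)).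
  - apply Rmult_le_compat_r; [left; apply Rinv_0_lt_compat; lra|lra].
  - right. field. lra.
Qed.

Lemma psum_expw_le : exists K, 0 < K /\ forall m, (1 <= m)%nat ->
  psum (expw s a) m <= K * INR m * expw s a m.
Proof.
  destruct (Rpower_exp_quasi_increasing (- (2 * s)) (2 * a) ltac:(lra)) as [K [HK Hmono]].
  exists K. split; auto. intros m Hm.
  apply Rle_trans with (psum (fun _ => K * expw s a m) m).
  - apply psum_le. intros j Hj. unfold expw. unfold Rminus. rewrite !exp_plus.
    assert (1 <= INR j <= INR m) by (split; [apply INR_ge_1|apply le_INR]; lia).
    specialize (Hmono (INR j) (INR m) H). pose proof (exp_pos (- (1))). nra.
  - rewrite psum_const. lra.
Qed.

Lemma expw_ge_exp_half : exists c, 0 < c /\ forall m, (1 <= m)%nat ->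
  c * exp (Rpower (INR m) (2 * a) / 2) <= expw s a m.
Proof.
  destruct (Rpower_le_exp (s / a) (/ 2) ltac:(lra)) as [C [HC HP]].
  exists (exp (-1) / C). split; [apply Rdiv_lt_0_compat; [apply exp_pos|lra]|].
  intros m Hm. set (A := Rpower (INR m) (2 * a)).
  assert (HA : 1 <= A) by (apply Rpower_ge_1; [apply INR_ge_1|]; auto; lra).
  specialize (HP A HA).
  assert (EA : Rpower (INR m) (- (2 * s)) = / Rpower A (s / a)).
  { rewrite <- Rpower_Ropp. unfold A. rewrite Rpower_mult. f_equal. field. lra. }
  unfold expw. fold A. rewrite EA.
  pose proof (Rpower_pos A (s / a)). pose proof (exp_pos (A / 2)). pose proof (exp_pos (-1)).
  assert (HeA : exp (A - 1) = exp (A / 2) * exp (A / 2) * exp (-1))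
    by (rewrite <- !exp_plus; f_equal; field).
  rewrite HeA. replace (/ 2 * A) with (A / 2) in HP by field.
  apply Rmult_le_reg_r with (C * Rpower A (s / a)); [nra|].
  replace (exp (-1) / C * exp (A / 2) * (C * Rpower A (s / a)))
    with (exp (-1) * exp (A / 2) * Rpower A (s / a)) by (field; lra).
  replace (/ Rpower A (s / a) * (exp (A / 2) * exp (A / 2) * exp (-1)) * (C * Rpower A (s / a)))
    with (exp (-1) * exp (A / 2) * (C * exp (A / 2))) by (field; lra).
  apply Rmult_le_compat_l; [|lra]. apply Rmult_le_pos; lra.
Qed.

Lemma pe_lower : risk_lower_bound Tpe gpe Spe (fun L => Rpower L (- k)) 2.
Proof.
  assert (Hk : 0 < k) by (unfold k, q; apply Rdiv_lt_0_compat; lra).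
  destruct expw_ge_exp_half as [cw [Hcw Hw]].
  set (c1 := Rpower 2 (- q) * Rpower 2 (- k)).
  assert (Hc1 : 0 < c1)
    by (unfold c1; pose proof (Rpower_pos 2 (- q)); pose proof (Rpower_pos 2 (- k)); nra).
  exists (Rmin c1 cw). split; [apply Rmin_pos; auto|].
  intros L m HL Hm. destruct (xlog_bounds L ltac:(lra)) as [_ [_ Hxi]].
  pose proof (Rmin_l c1 cw). pose proof (Rmin_r c1 cw). pose proof (Rmin_pos _ _ Hc1 Hcw).
  set (v := Rpower L (- k)).
  assert (Hv : 0 < v) by apply Rpower_pos. assert (Hv1 : v <= 1) by (apply Rpower_le_1; lra).
  set (M := INR m). assert (HM : 1 <= M) by (apply INR_ge_1; auto).
  set (A := Rpower M (2 * a)). assert (HA : 1 <= A) by (apply Rpower_ge_1; lra).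
  destruct (Rle_or_lt A (2 * L)) as [Hc|Hc].
  - eapply Rle_trans; [|apply risk_ge_tail].
    destruct (tail_jpow_bounds q m Hq Hm) as [HT _]. fold M in HT.
    eapply Rle_trans; [|apply HT].
    assert (E : Rpower M (1 - q) = Rpower A (- k)).
    { unfold A, k. rewrite Rpower_mult. f_equal. field. lra. }
    assert (H2L : Rpower (2 * L) (- k) <= Rpower A (- k)) by (apply Rpower_le_base_neg; lra).
    rewrite <- Rpower_mult_distr in H2L by lra. fold v in H2L.
    pose proof (Rpower_pos 2 (- q)). pose proof (Rpower_pos 2 (- k)).
    rewrite E. apply Rle_trans with (c1 * v); [apply Rmult_le_compat_r; lra|].
    unfold c1. rewrite Rmult_assoc. apply Rmult_le_compat_l; lra.
  - eapply Rle_trans; [|apply risk_ge_var, psum_expw_nonneg].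
    assert (Hlast := psum_ge_last (expw s a) m Hm (fun j => Rlt_le _ _ (expw_pos j))).
    specialize (Hw m Hm). fold M A in Hw.
    assert (HeA : exp L <= exp (A / 2)) by (apply exp_le_compat; lra).
    assert (cw <= xlog L * psum (expw s a) m).
    { pose proof (exp_pos L). assert (0 < / exp L) by (apply Rinv_0_lt_compat; lra).
      apply Rle_trans with (/ exp L * (cw * exp (A / 2))).
      - replace cw with (/ exp L * (cw * exp L)) at 1 by (field; lra).
        apply Rmult_le_compat_l; [lra|]. apply Rmult_le_compat_l; lra.
      - apply Rmult_le_compat; try lra.
        apply Rmult_le_pos; [lra|left; apply exp_pos]. }
    apply Rle_trans with (cw * v); [apply Rmult_le_compat_r; lra|]. unfold Spe. nra.
Qed.

(** The balance point [m ~ (L/2)^(1/(2a))]. *)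
Lemma pe_balance_point : exists K, 0 < K /\ forall L, 2 <= L -> exists m, (1 <= m)%nat /\
  Rpower (INR m) (2 * a) <= L / 2 /\ Rpower (INR m) (2 * p) <= Rpower L (p / a) /\
  Rpower (INR m) (1 - q) <= K * Rpower L (- k).
Proof.
  set (K := Rpower 2 (q - 1) * Rpower 2 k).
  exists K. split; [unfold K; pose proof (Rpower_pos 2 (q - 1)); pose proof (Rpower_pos 2 k); nra|].
  intros L HL. set (z := Rpower (L / 2) (/ (2 * a))).
  assert (Hz : 1 <= z) by (apply Rpower_ge_1; [lra|apply Rlt_le, Rinv_0_lt_compat; lra]).
  assert (Hz2a : Rpower z (2 * a) = L / 2).
  { unfold z. rewrite Rpower_mult. replace (/ (2 * a) * (2 * a)) with 1 by (field; lra).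
    apply Rpower_1; lra. }
  destruct (nat_between_half z Hz) as [m [Hm Hzm]]. exists m. split; auto.
  set (M := INR m) in *. split; [rewrite <- Hz2a; apply Rpower_le_base; lra|split].
  - apply Rle_trans with (Rpower z (2 * p)); [apply Rpower_le_base; lra|].
    unfold z. rewrite Rpower_mult. replace (/ (2 * a) * (2 * p)) with (p / a) by (field; lra).
    apply Rpower_le_base; [apply Rlt_le, Rdiv_lt_0_compat|..]; lra.
  - apply Rle_trans with (Rpower (z / 2) (1 - q)); [apply Rpower_le_base_neg; unfold q; lra|].
    unfold z, Rdiv.
    rewrite <- Rpower_mult_distr, Rpower_mult, <- Rpower_mult_distr, !Rpower_inv
      by (try apply Rpower_pos; try apply Rinv_0_lt_compat; try apply Rmult_lt_0_compat;
          try apply Rinv_0_lt_compat; lra).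
    unfold K, k. replace (/ (2 * a) * (1 - q)) with (- ((q - 1) / (2 * a))) by (field; lra).
    replace (- (1 - q)) with (q - 1) by ring.
    replace (- - ((q - 1) / (2 * a))) with ((q - 1) / (2 * a)) by ring. right; ring.
Qed.

(** Below the balance point every term of [risk] is [O(m^(1-q))]: the sum [Spe m] is
    [O(m expw m)], so [gpe m Spe m = O(m^(1-q))], and [x Spe m] carries the extra factor
    [x L^(p/a) e^(L/2)], which is bounded. *)
Lemma pe_risk_le : exists C, 0 < C /\ forall L m, 2 <= L -> (1 <= m)%nat ->
  Rpower (INR m) (2 * a) <= L / 2 -> Rpower (INR m) (2 * p) <= Rpower L (p / a) ->
  risk Tpe gpe Spe (xlog L) m <= C * Rpower (INR m) (1 - q).
Proof.
  assert (Hiq : 0 < / (q - 1)) by (apply Rinv_0_lt_compat; unfold q; lra).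
  destruct psum_expw_le as [Kt [HKt HS]].
  destruct (xlog_Rpower_exp_half_bounded (p / a)) as [Cx [HCx HPx]].
  exists (/ (q - 1) + Kt + Kt * Cx). split; [nra|].
  intros L m HL Hm HAL HMp. destruct (xlog_bounds L ltac:(lra)) as [[Hx0 _] _].
  set (M := INR m) in *. assert (HM : 1 <= M) by (apply INR_ge_1; auto).
  set (A := Rpower M (2 * a)) in *.
  set (t := Rpower M (1 - q)). assert (Ht0 : 0 < t) by apply Rpower_pos.
  assert (HSm : Spe m <= Kt * t * Rpower M (2 * p) * exp (A - 1)).
  { eapply Rle_trans; [apply HS; auto|]. fold M. unfold expw. fold M A.
    replace (Kt * M * (Rpower M (- (2 * s)) * exp (A - 1)))
      with (Kt * (M * Rpower M (- (2 * s))) * exp (A - 1)) by ring.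
    rewrite Rpower_plus_1 by lra. replace (- (2 * s) + 1) with (1 - q + 2 * p) by (unfold q; ring).
    rewrite Rpower_plus. unfold t. right; ring. }
  pose proof (Rpower_pos M (2 * p)). pose proof (exp_pos (A - 1)).
  assert (HS0 : 0 <= Spe m) by apply psum_expw_nonneg.
  assert (Hg0 : 0 < gpe m) by (apply Rdiv_lt_0_compat; apply Rpower_pos || apply exp_pos).
  assert (HgS : gpe m * Spe m <= Kt * t).
  { apply Rle_trans with (gpe m * (Kt * t * Rpower M (2 * p) * exp (A - 1)));
      [apply Rmult_le_compat_l; lra|].
    unfold gpe. fold M A. replace (- A + 1) with (- (A - 1)) by ring. rewrite exp_Ropp.
    right. field. split; lra. }
  assert (HxS : xlog L * Spe m <= Kt * Cx * t).
  { specialize (HPx L ltac:(lra)).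
    assert (HeA : exp (A - 1) <= exp (L / 2)) by (apply exp_le_compat; lra).
    apply Rle_trans with (xlog L * (Kt * t * (Rpower L (p / a) * exp (L / 2)))).
    - apply Rmult_le_compat_l; [lra|]. eapply Rle_trans; [apply HSm|]. rewrite Rmult_assoc.
      apply Rmult_le_compat_l; [nra|]. apply Rmult_le_compat; lra.
    - replace (xlog L * (Kt * t * (Rpower L (p / a) * exp (L / 2))))
        with (Kt * t * (xlog L * (Rpower L (p / a) * exp (L / 2)))) by ring.
      assert (0 < Kt * t) by nra. nra. }
  destruct (tail_jpow_bounds q m Hq Hm) as [_ HT]. fold M t in HT.
  apply risk_le_sum; auto; try lra.
  - eapply Rle_trans; [apply HT|]. unfold Rdiv. nra.
  - nra.
Qed.

Lemma pe_upper : risk_upper_bound Tpe gpe Spe (fun L => Rpower L (- k)) 2.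
Proof.
  destruct pe_balance_point as [K [HK Hbal]]. destruct pe_risk_le as [C [HC Hrisk]].
  exists (C * K). split; [nra|]. intros L HL.
  destruct (Hbal L HL) as [m [Hm [HA [HMp Ht]]]]. exists m. split; auto.
  eapply Rle_trans; [apply Hrisk; auto|]. rewrite Rmult_assoc.
  apply Rmult_le_compat_l; lra.
Qed.

End PolynomialExponential.

Lemma Rstar_polynomial_exponential (p a s : R) (l : nat -> R) :
  0 < p -> 0 < a -> 1/2 - p < s ->
  (forall j : nat, (1 <= j)%nat -> (l j) ^ 2 = Rpower (INR j) (- (2 * s))) ->
  let beta := fun j : nat => Rpower (INR j) (2 * p) in
  let gamma := fun j : nat => exp (- Rpower (INR j) (2 * a) + 1) in
  asymp (Rstar_seq l beta gamma)
    (fun n => Rpower (ln (INR n)) (- ((2*p + 2*s - 1) / (2*a)))).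
Proof.
  intros Hp Ha Hs Hl beta gamma. set (q := 2 * s + 2 * p).
  assert (Hq : 1 < q) by (unfold q; lra).
  set (g := fun m => exp (- Rpower (INR m) (2 * a) + 1) / Rpower (INR m) (2 * p)).
  assert (HRm : forall x m, (1 <= m)%nat ->
    Rm l beta gamma x m = risk (tail (jpow (- q))) g (psum (expw s a)) x m).
  { intros x m Hm. apply Rm_risk; [intros j Hj; rewrite Hl by auto..|reflexivity].
    - unfold beta, jpow. rewrite Rpower_div by (apply INR_ge_1 in Hj; lra).
      f_equal. unfold q. ring.
    - unfold gamma, expw, Rdiv. rewrite <- exp_Ropp. do 2 f_equal. ring. }
  replace ((2*p + 2*s - 1) / (2*a)) with ((q - 1) / (2 * a)) by (unfold q; field; lra).
  apply (asymp_Rstar_seq _ _ _ _ _ _ (fun L => Rpower L (- ((q - 1) / (2 * a)))) _ 2 HRm).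
  - intros; apply psum_expw_nonneg.
  - reflexivity.
  - apply pe_lower; auto.
  - apply pe_upper; auto.
Qed.

(** * Exponential beta, polynomial gamma *)

(** In case (ep), [expinv s p j = [l]_j^2 / beta_j] and [expinv a p m = gamma_m / beta_m]. *)
Definition expinv (s p : R) (j : nat) : R :=
  Rpower (INR j) (- (2 * s)) / exp (Rpower (INR j) (2 * p) - 1).

Section ExponentialPolynomial.
Variables p a s : R.
Hypotheses (Hp : 0 < p) (Ha : 1/2 < a).

Let r := 2 * a - 2 * s.
Let Tep := tail (expinv s p).
Let gep := expinv a p.
Let Sep := psum (jpow r).

Lemma expinv_pos b j : 0 < expinv b p j.
Proof. apply Rdiv_lt_0_compat; [apply Rpower_pos|apply exp_pos]. Qed.

Lemma expinv_le : exists C, 0 < C /\ forall j, (1 <= j)%nat ->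
  expinv s p j <= C * exp (- (Rpower (INR j) (2 * p) / 2)) * jpow (- 2) j.
Proof.
  destruct (Rpower_le_exp ((1 - s) / p) (/ 2) ltac:(lra)) as [C [HC HP]].
  exists (C * exp 1). split; [pose proof (exp_pos 1); nra|]. intros j Hj.
  set (y := INR j). assert (Hy : 1 <= y) by (apply INR_ge_1; auto).
  set (P := Rpower y (2 * p)). assert (HP1 : 1 <= P) by (apply Rpower_ge_1; lra).
  specialize (HP P HP1).
  assert (E : Rpower P ((1 - s) / p) = Rpower y (2 - 2 * s))
    by (unfold P; rewrite Rpower_mult; f_equal; field; lra).
  rewrite E in HP.
  assert (E2 : Rpower y (- (2 * s)) = Rpower y (2 - 2 * s) * Rpower y (- 2))
    by (rewrite <- Rpower_plus; f_equal; ring).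
  unfold expinv, jpow. fold y P. rewrite E2. unfold Rdiv at 1.
  set (u := exp (- (P / 2))). set (w := exp (/ 2 * P)) in HP.
  assert (E3 : / exp (P - 1) = exp 1 * u * u).
  { unfold u. rewrite <- !exp_plus, <- exp_Ropp. f_equal. field. }
  assert (E4 : w * u = 1).
  { unfold u, w. rewrite <- exp_plus. replace (/ 2 * P + - (P / 2)) with 0 by field.
    apply exp_0. }
  rewrite E3. pose proof (Rpower_pos y (-2)). pose proof (exp_pos 1).
  assert (0 < u) by apply exp_pos. pose proof (Rpower_pos y (2 - 2 * s)).
  apply Rle_trans with (C * w * Rpower y (-2) * (exp 1 * u * u)).
  - apply Rmult_le_compat_r; [nra|]. apply Rmult_le_compat_r; lra.
  - right. replace (C * w * Rpower y (-2) * (exp 1 * u * u))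
      with (C * exp 1 * u * Rpower y (-2) * (w * u)) by ring.
    rewrite E4. ring.
Qed.

Lemma tail_expinv_bounds : exists K, 0 < K /\
  (forall m, (1 <= m)%nat -> expinv s p (S m) <= Tep m) /\
  (forall m L, (1 <= m)%nat -> 2 * L <= Rpower (INR m) (2 * p) -> Tep m <= K / exp L).
Proof.
  destruct expinv_le as [C0 [HC0 HB]]. exists C0. split; auto.
  assert (Hblock : forall m c M, (1 <= m <= M)%nat -> 0 <= c ->
     (forall j, (m < j <= M)%nat -> exp (- (Rpower (INR j) (2 * p) / 2)) <= c) ->
     psum (expinv s p) M - psum (expinv s p) m <= C0 * c).
  { intros m c M HmM Hc Hj.
    eapply Rle_trans; [apply (psum_diff_le _ (fun j => C0 * c * jpow (- 2) j)); [lia|]|].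
    - intros j Hj'. eapply Rle_trans; [apply HB; lia|]. pose proof (jpow_pos (- 2) j).
      apply Rmult_le_compat_r; [lra|]. apply Rmult_le_compat_l; [lra|]. apply Hj; auto.
    - rewrite !psum_scal, <- Rmult_minus_distr_l.
      pose proof (psum_jpow_diff_le 2 m M ltac:(lra) HmM) as Hd.
      replace (- (2)) with (-2) in Hd by ring. replace (2 - 1) with 1 in Hd by ring.
      assert (Rpower (INR m) (1 - 2) <= 1) by (apply Rpower_le_1; [apply INR_ge_1; lia|lra]).
      assert (0 <= C0 * c) by nra. unfold Rdiv in Hd. rewrite Rinv_1, Rmult_1_r in Hd.
      rewrite <- (Rmult_1_r (C0 * c)) at 2. apply Rmult_le_compat_l; lra. }
  split.
  - intros m Hm. destruct (tail_bounds (expinv s p) m (C0 * 1)) as [_ H2].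
    + intros; left; apply expinv_pos.
    + intros M HM. destruct (Nat.eq_dec M m) as [e|e].
      * subst. rewrite Rminus_diag. lra.
      * apply Hblock; [lia|lra|]. intros j Hj. rewrite <- exp_0. apply exp_le_compat.
        assert (0 < Rpower (INR j) (2 * p)) by apply Rpower_pos. lra.
    + specialize (H2 (S m) ltac:(lia)). simpl in H2. unfold Tep. lra.
  - intros m L Hm HL. destruct (tail_bounds (expinv s p) m (C0 * / exp L)) as [H1 _].
    + intros; left; apply expinv_pos.
    + intros M HM. pose proof (exp_pos L).
      assert (0 < / exp L) by (apply Rinv_0_lt_compat; lra).
      destruct (Nat.eq_dec M m) as [e|e].
      * subst. rewrite Rminus_diag. nra.
      * apply Hblock; [lia|lra|]. intros j Hj. rewrite <- exp_Ropp. apply exp_le_compat.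
        assert (Rpower (INR m) (2 * p) <= Rpower (INR j) (2 * p)).
        { apply Rpower_le_base; [lra|apply INR_ge_1 in Hm; lra|apply le_INR; lia]. }
        lra.
    + exact H1.
Qed.

Lemma tail_expinv_ge : exists c, 0 < c /\ forall L m, 1 <= L -> (1 <= m)%nat ->
  Rpower (INR m + 1) (2 * p) <= L / 2 -> c * (exp (L / 4) / exp L) <= Tep m.
Proof.
  destruct tail_expinv_bounds as [K [HK [Hlow _]]].
  destruct (Rpower_le_exp (s / p) (/ 4) ltac:(lra)) as [C' [HC' HP]].
  exists (/ C'). split; [apply Rinv_0_lt_compat; lra|]. intros L m HL Hm HPL.
  eapply Rle_trans; [|apply Hlow; auto].
  unfold expinv. rewrite S_INR. set (y := INR m + 1) in *.
  assert (Hy : 1 <= y) by (unfold y; pose proof (pos_INR m); lra).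
  set (P := Rpower y (2 * p)) in *. assert (HP1 : 1 <= P) by (apply Rpower_ge_1; lra).
  specialize (HP P HP1).
  assert (E : Rpower P (s / p) = Rpower y (2 * s))
    by (unfold P; rewrite Rpower_mult; f_equal; field; lra).
  rewrite E in HP. rewrite Rpower_Ropp.
  pose proof (Rpower_pos y (2 * s)). pose proof (exp_pos (P - 1)). pose proof (exp_pos L).
  pose proof (exp_pos (/ 4 * P)).
  assert (HH : exp (L / 4) / exp L <= / exp (/ 4 * P) * / exp (P - 1)).
  { rewrite <- !exp_Ropp, <- exp_plus. unfold Rdiv. rewrite <- exp_Ropp, <- exp_plus.
    apply exp_le_compat. lra. }
  apply Rle_trans with (/ C' * (/ exp (/ 4 * P) * / exp (P - 1))).
  { apply Rmult_le_compat_l; [left; apply Rinv_0_lt_compat; lra|auto]. }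
  unfold Rdiv. rewrite <- Rmult_assoc.
  apply Rmult_le_compat_r; [left; apply Rinv_0_lt_compat; lra|].
  rewrite <- Rinv_mult. apply Rinv_le_contravar; [nra|]. exact HP.
Qed.

(** The balance point [m ~ (2L)^(1/(2p))]. *)
Lemma ep_balance_point L : 1 <= L -> exists m, (1 <= m)%nat /\
  2 * L <= Rpower (INR m) (2 * p) /\ INR m <= 2 * Rpower (2 * L) (/ (2 * p)) /\
  gep m <= / exp L.
Proof.
  intros HL. set (z := Rpower (2 * L) (/ (2 * p))).
  assert (Hz : 1 <= z) by (apply Rpower_ge_1; [lra|left; apply Rinv_0_lt_compat; lra]).
  destruct (nat_between z Hz) as [m [Hm Hzm]]. exists m. split; auto.
  assert (HP : 2 * L <= Rpower (INR m) (2 * p)).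
  { replace (2 * L) with (Rpower z (2 * p)).
    - apply Rpower_le_base; lra.
    - unfold z. rewrite Rpower_mult. replace (/ (2 * p) * (2 * p)) with 1 by (field; lra).
      apply Rpower_1; lra. }
  split; auto. split; [lra|].
  unfold gep, expinv. assert (Rpower (INR m) (- (2 * a)) <= 1)
    by (apply Rpower_le_1; [apply INR_ge_1; auto|lra]).
  pose proof (Rpower_pos (INR m) (- (2 * a))).
  assert (/ exp (Rpower (INR m) (2 * p) - 1) <= / exp L).
  { apply Rinv_le_contravar; [apply exp_pos|]. apply exp_le_compat. lra. }
  assert (0 < / exp (Rpower (INR m) (2 * p) - 1)) by (apply Rinv_0_lt_compat, exp_pos).
  unfold Rdiv. nra.
Qed.

Lemma ep_lower (V : R -> R) :
  (exists C, 0 < C /\ forall L, 4 <= L -> 0 <= V L <= C * (exp (L / 4) / exp L)) ->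
  (exists c, 0 < c /\ forall L m, 4 <= L -> (1 <= m)%nat ->
     L / 2 < Rpower (INR m + 1) (2 * p) -> c * V L <= L / exp L * Sep m) ->
  risk_lower_bound Tep gep Sep V 4.
Proof.
  intros [C [HC HV]] [c [Hc HS]]. destruct tail_expinv_ge as [c3 [Hc3 HT]].
  exists (Rmin (c3 / C) c). split; [apply Rmin_pos; [apply Rdiv_lt_0_compat|]; auto|].
  intros L m HL Hm. specialize (HV L HL).
  destruct (xlog_bounds L ltac:(lra)) as [_ [[HxL _] _]].
  pose proof (Rmin_l (c3 / C) c). pose proof (Rmin_r (c3 / C) c).
  destruct (Rle_or_lt (Rpower (INR m + 1) (2 * p)) (L / 2)) as [Hc'|Hc'].
  - eapply Rle_trans; [|apply risk_ge_tail]. eapply Rle_trans; [|apply (HT L m); auto; lra].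
    apply Rle_trans with (c3 / C * V L); [apply Rmult_le_compat_r; lra|].
    apply Rle_trans with (c3 / C * (C * (exp (L / 4) / exp L))).
    + apply Rmult_le_compat_l; [left; apply Rdiv_lt_0_compat|]; lra.
    + right. field. pose proof (exp_pos L). split; lra.
  - eapply Rle_trans; [|apply risk_ge_var, psum_jpow_nonneg].
    apply Rle_trans with (c * V L); [apply Rmult_le_compat_r; lra|].
    eapply Rle_trans; [apply (HS L m); auto|].
    apply Rmult_le_compat_r; [apply psum_jpow_nonneg|lra].
Qed.

Lemma ep_upper (V : R -> R) :
  (forall L, 4 <= L -> / exp L <= V L) ->
  (exists C, 0 < C /\ forall L m, 4 <= L -> (1 <= m)%nat ->
     INR m <= 2 * Rpower (2 * L) (/ (2 * p)) -> L / exp L * Sep m <= C * V L) ->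
  risk_upper_bound Tep gep Sep V 4.
Proof.
  intros HV [C [HC HS]]. destruct tail_expinv_bounds as [K [HK [_ HT]]].
  exists (K + 2 * C). split; [lra|]. intros L HL. specialize (HV L HL).
  destruct (xlog_bounds L ltac:(lra)) as [[Hx0 _] [[_ HxU] Hxi]].
  pose proof (exp_pos L). assert (0 < / exp L) by (apply Rinv_0_lt_compat; lra).
  destruct (ep_balance_point L ltac:(lra)) as [m0 [Hm0 [HP0 [HM0 Hg0]]]].
  exists m0. split; auto. specialize (HS L m0 HL Hm0 HM0).
  assert (0 <= Sep m0) by apply psum_jpow_nonneg.
  apply risk_le with (y := xlog L); auto; try lra.
  - eapply Rle_trans; [apply (HT m0 L); auto|].
    assert (K / exp L <= K * V L) by (unfold Rdiv; apply Rmult_le_compat_l; lra).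
    assert (0 <= C * V L) by (apply Rmult_le_pos; lra). lra.
  - apply Rle_trans with (2 * L / exp L * Sep m0); [apply Rmult_le_compat_r; lra|].
    replace (2 * L / exp L * Sep m0) with (2 * (L / exp L * Sep m0)) by (field; lra).
    assert (0 <= K * V L) by (apply Rmult_le_pos; lra). lra.
Qed.

Lemma ep_subcritical_lower : s - a < 1/2 ->
  risk_lower_bound Tep gep Sep (fun L => Rpower L ((2*p + 2*a - 2*s + 1) / (2*p)) / exp L) 4.
Proof.
  intros Hsa. assert (Hr : -1 < r) by (unfold r; lra).
  set (e := (r + 1) / (2 * p)). assert (He : 0 < e) by (unfold e; apply Rdiv_lt_0_compat; lra).
  assert (Hk : (2*p + 2*a - 2*s + 1) / (2*p) = e + 1) by (unfold e, r; field; lra).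
  rewrite Hk. apply ep_lower.
  - destruct (Rpower_le_exp (e + 1) (/ 4) ltac:(lra)) as [C [HC HP]].
    exists C. split; auto. intros L HL. pose proof (exp_pos L). pose proof (Rpower_pos L (e + 1)).
    split; [left; apply Rdiv_lt_0_compat; lra|]. specialize (HP L ltac:(lra)).
    replace (/ 4 * L) with (L / 4) in HP by field. unfold Rdiv. rewrite <- Rmult_assoc.
    apply Rmult_le_compat_r; [left; apply Rinv_0_lt_compat|]; lra.
  - destruct (psum_jpow_ge r Hr) as [cS [HcS Hlow]].
    set (c := cS * Rpower 2 (- (r + 1)) * Rpower 2 (- e)).
    exists c. split; [unfold c; pose proof (Rpower_pos 2 (- (r + 1)));
      pose proof (Rpower_pos 2 (- e)); apply Rmult_lt_0_compat; [apply Rmult_lt_0_compat|]; auto|].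
    intros L m HL Hm Hc. specialize (Hlow m Hm). set (M := INR m) in *.
    assert (HM : 1 <= M) by (apply INR_ge_1; auto).
    set (P := Rpower (M + 1) (2 * p)) in *.
    assert (E1 : Rpower (M + 1) (r + 1) = Rpower P e)
      by (unfold P, e; rewrite Rpower_mult; f_equal; field; lra).
    assert (H1 : Rpower (L / 2) e <= Rpower P e) by (apply Rpower_le_base; lra).
    unfold Rdiv in H1. rewrite <- Rpower_mult_distr, Rpower_inv in H1 by lra.
    assert (H2 : Rpower ((M + 1) * / 2) (r + 1) <= Rpower M (r + 1))
      by (apply Rpower_le_base; lra).
    rewrite <- Rpower_mult_distr, Rpower_inv, E1 in H2 by lra.
    pose proof (Rpower_pos L e). pose proof (Rpower_pos 2 (- e)).
    pose proof (Rpower_pos 2 (- (r + 1))). pose proof (Rpower_pos P e).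
    assert (HSm : c * Rpower L e <= Sep m).
    { eapply Rle_trans; [|apply Hlow].
      assert (Rpower 2 (- (r + 1)) * (Rpower L e * Rpower 2 (- e))
              <= Rpower 2 (- (r + 1)) * Rpower P e) by (apply Rmult_le_compat_l; lra).
      replace (c * Rpower L e)
        with (cS * (Rpower 2 (- (r + 1)) * (Rpower L e * Rpower 2 (- e)))) by (unfold c; ring).
      apply Rmult_le_compat_l; lra. }
    rewrite <- (Rpower_plus_1 L) by lra. pose proof (exp_pos L).
    apply Rle_trans with (L / exp L * (c * Rpower L e)); [right; field; lra|].
    apply Rmult_le_compat_l; [left; apply Rdiv_lt_0_compat|]; lra.
Qed.

Lemma ep_subcritical_upper : s - a < 1/2 ->
  risk_upper_bound Tep gep Sep (fun L => Rpower L ((2*p + 2*a - 2*s + 1) / (2*p)) / exp L) 4.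
Proof.
  intros Hsa. assert (Hr : -1 < r) by (unfold r; lra).
  set (e := (r + 1) / (2 * p)). assert (He : 0 < e) by (unfold e; apply Rdiv_lt_0_compat; lra).
  assert (Hk : (2*p + 2*a - 2*s + 1) / (2*p) = e + 1) by (unfold e, r; field; lra).
  rewrite Hk. apply ep_upper.
  - intros L HL. pose proof (exp_pos L). unfold Rdiv. rewrite <- (Rmult_1_l (/ exp L)) at 1.
    apply Rmult_le_compat_r; [left; apply Rinv_0_lt_compat; lra|].
    apply Rpower_ge_1; lra.
  - destruct (psum_jpow_le r Hr) as [CS [HCS Hup]].
    pose proof (Rpower_pos 2 (r + 1)). pose proof (Rpower_pos 2 e).
    exists (CS * Rpower 2 (r + 1) * Rpower 2 e). split; [apply Rmult_lt_0_compat; nra|].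
    intros L m HL Hm HM. specialize (Hup m Hm).
    set (z := Rpower (2 * L) (/ (2 * p))) in *.
    assert (Hz : 0 < z) by apply Rpower_pos.
    assert (HMz : Rpower (INR m) (r + 1) <= Rpower (2 * z) (r + 1))
      by (apply Rpower_le_base; [lra|apply INR_ge_1 in Hm; lra|lra]).
    rewrite <- Rpower_mult_distr in HMz by lra.
    assert (E : Rpower z (r + 1) = Rpower 2 e * Rpower L e).
    { unfold z. rewrite Rpower_mult, Rpower_mult_distr by lra. f_equal. unfold e. field. lra. }
    rewrite E in HMz. pose proof (Rpower_pos L e). pose proof (exp_pos L).
    assert (HS : Sep m <= CS * Rpower 2 (r + 1) * Rpower 2 e * Rpower L e).
    { eapply Rle_trans; [apply Hup|].
      replace (CS * Rpower 2 (r + 1) * Rpower 2 e * Rpower L e)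
        with (CS * (Rpower 2 (r + 1) * (Rpower 2 e * Rpower L e))) by ring.
      apply Rmult_le_compat_l; lra. }
    rewrite <- (Rpower_plus_1 L) by lra.
    apply Rle_trans with (L / exp L * (CS * Rpower 2 (r + 1) * Rpower 2 e * Rpower L e)).
    + apply Rmult_le_compat_l; [left; apply Rdiv_lt_0_compat|]; lra.
    + right. field. lra.
Qed.

Lemma ep_critical_lower : s - a = 1/2 ->
  risk_lower_bound Tep gep Sep (fun L => L * ln L / exp L) 4.
Proof.
  intros Hsa. assert (Hr : r = -1) by (unfold r; lra). apply ep_lower.
  - destruct (Rpower_le_exp 2 (/ 4) ltac:(lra)) as [C [HC HP]].
    exists C. split; auto. intros L HL. pose proof (exp_pos L).
    assert (HlnL : 0 <= ln L <= L)
      by (split; [rewrite <- ln_1; apply ln_le|pose proof (ln_le_sub_1 L)]; lra).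
    split; [apply Rmult_le_pos; [nra|left; apply Rinv_0_lt_compat; lra]|].
    specialize (HP L ltac:(lra)). replace (/ 4 * L) with (L / 4) in HP by field.
    replace 2 with (INR 2) in HP at 1 by (simpl; ring). rewrite Rpower_pow in HP by lra.
    simpl in HP. unfold Rdiv. rewrite <- Rmult_assoc.
    apply Rmult_le_compat_r; [left; apply Rinv_0_lt_compat|]; nra.
  - exists (/ (4 * p)). split; [apply Rinv_0_lt_compat; lra|].
    intros L m HL Hm Hc. unfold Sep. rewrite Hr.
    pose proof (psum_harmonic_ge m Hm) as HS. pose proof (exp_pos L).
    assert (Hln : ln (L / 2) < ln (Rpower (INR m + 1) (2 * p)))
      by (apply ln_increasing; lra).
    rewrite ln_Rpower in Hln.
    assert (E2 : ln (L / 2) = ln L - ln 2) by (unfold Rdiv; rewrite ln_mult, ln_Rinv by lra; ring).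
    assert (E4 : ln 4 = 2 * ln 2) by (replace 4 with (2 * 2) by ring; rewrite ln_mult by lra; ring).
    assert (ln 4 <= ln L) by (apply ln_le; lra).
    assert (HlnM : ln L / (4 * p) <= ln (INR m + 1)).
    { apply Rmult_le_reg_r with (4 * p); [lra|]. unfold Rdiv.
      rewrite Rmult_assoc, Rinv_l by lra. nra. }
    apply Rle_trans with (L / exp L * (ln L / (4 * p))); [right; field; lra|].
    apply Rmult_le_compat_l; [left; apply Rdiv_lt_0_compat|]; lra.
Qed.

Lemma ep_critical_upper : s - a = 1/2 ->
  risk_upper_bound Tep gep Sep (fun L => L * ln L / exp L) 4.
Proof.
  intros Hsa. assert (Hr : r = -1) by (unfold r; lra).
  assert (HlnL : forall L, 4 <= L -> 1 <= ln L).
  { intros L HL. rewrite <- (ln_exp 1). apply ln_le; [apply exp_pos|].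
    pose proof exp_le_3. lra. }
  apply ep_upper.
  - intros L HL. specialize (HlnL L HL). pose proof (exp_pos L).
    unfold Rdiv. rewrite <- (Rmult_1_l (/ exp L)) at 1.
    apply Rmult_le_compat_r; [left; apply Rinv_0_lt_compat|]; nra.
  - assert (Hip : 0 < / p) by (apply Rinv_0_lt_compat; lra).
    exists (2 + / p). split; [lra|]. intros L m HL Hm HM. specialize (HlnL L HL).
    unfold Sep. rewrite Hr. pose proof (psum_harmonic_le m Hm) as HS.
    set (z := Rpower (2 * L) (/ (2 * p))) in *.
    assert (Hz : 0 < z) by apply Rpower_pos.
    assert (ln (INR m) <= ln (2 * z)) by (apply ln_le; [apply INR_ge_1 in Hm; lra|lra]).
    rewrite ln_mult in H by lra. unfold z in H. rewrite ln_Rpower, ln_mult in H by lra.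
    pose proof ln_2_le_1.
    assert (ln 2 <= ln L) by (apply ln_le; lra).
    assert (/ (2 * p) * (ln 2 + ln L) <= / p * ln L).
    { replace (/ p * ln L) with (/ (2 * p) * (2 * ln L)) by (field; lra).
      apply Rmult_le_compat_l; [left; apply Rinv_0_lt_compat; lra|lra]. }
    assert (HS2 : psum (jpow (-1)) m <= (2 + / p) * ln L) by nra.
    pose proof (exp_pos L).
    apply Rle_trans with (L / exp L * ((2 + / p) * ln L)).
    + apply Rmult_le_compat_l; [left; apply Rdiv_lt_0_compat|]; lra.
    + right. field. lra.
Qed.

Lemma ep_supercritical_lower : s - a > 1/2 -> risk_lower_bound Tep gep Sep (fun L => L / exp L) 4.
Proof.
  intros Hsa. apply ep_lower.
  - destruct (Rpower_le_exp 1 (/ 4) ltac:(lra)) as [C [HC HP]].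
    exists C. split; auto. intros L HL. pose proof (exp_pos L).
    split; [left; apply Rdiv_lt_0_compat; lra|].
    specialize (HP L ltac:(lra)). rewrite Rpower_1 in HP by lra.
    replace (/ 4 * L) with (L / 4) in HP by field. unfold Rdiv. rewrite <- Rmult_assoc.
    apply Rmult_le_compat_r; [left; apply Rinv_0_lt_compat|]; lra.
  - exists 1. split; [lra|]. intros L m HL Hm _.
    pose proof (psum_jpow_ge_1 r m Hm). pose proof (exp_pos L).
    assert (0 < L / exp L) by (apply Rdiv_lt_0_compat; lra).
    unfold Sep. nra.
Qed.

Lemma ep_supercritical_upper : s - a > 1/2 ->
  risk_upper_bound Tep gep Sep (fun L => L / exp L) 4.
Proof.
  intros Hsa. assert (Hr : r < -1) by (unfold r; lra). apply ep_upper.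
  - intros L HL. pose proof (exp_pos L). unfold Rdiv. rewrite <- (Rmult_1_l (/ exp L)) at 1.
    apply Rmult_le_compat_r; [left; apply Rinv_0_lt_compat|]; lra.
  - assert (0 < / (- r - 1)) by (apply Rinv_0_lt_compat; lra).
    exists (1 + / (- r - 1)). split; [lra|].
    intros L m HL Hm _. pose proof (psum_jpow_bounded r m Hr Hm). pose proof (exp_pos L).
    assert (0 < L / exp L) by (apply Rdiv_lt_0_compat; lra).
    rewrite Rmult_comm. apply Rmult_le_compat_r; [lra|auto].
Qed.

End ExponentialPolynomial.

Lemma Rstar_exponential_polynomial (p a s : R) (l : nat -> R) :
  0 < p -> 1/2 < a ->
  (forall j : nat, (1 <= j)%nat -> (l j) ^ 2 = Rpower (INR j) (- (2 * s))) ->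
  let beta := fun j : nat => exp (Rpower (INR j) (2 * p) - 1) in
  let gamma := fun j : nat => Rpower (INR j) (- (2 * a)) in
  (s - a < 1/2 ->
     asymp (Rstar_seq l beta gamma)
       (fun n => Rpower (ln (INR n)) ((2*p + 2*a - 2*s + 1) / (2*p)) / INR n)) /\
  (s - a = 1/2 ->
     asymp (Rstar_seq l beta gamma) (fun n => ln (INR n) * ln (ln (INR n)) / INR n)) /\
  (s - a > 1/2 ->
     asymp (Rstar_seq l beta gamma) (fun n => ln (INR n) / INR n)).
Proof.
  intros Hp Ha Hl beta gamma. set (r := 2 * a - 2 * s).
  assert (HRm : forall x m, (1 <= m)%nat ->
    Rm l beta gamma x m = risk (tail (expinv s p)) (expinv a p) (psum (jpow r)) x m).
  { intros x m Hm. apply Rm_risk; [intros j Hj; rewrite Hl by auto..|reflexivity].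
    - reflexivity.
    - unfold gamma, jpow. rewrite Rpower_div by (apply INR_ge_1 in Hj; lra).
      f_equal. unfold r. ring. }
  assert (HS : forall m, (1 <= m)%nat -> 0 <= psum (jpow r) m)
    by (intros; apply psum_jpow_nonneg).
  split; [|split]; intros Hsa.
  - apply (asymp_Rstar_seq _ _ _ _ _ _
      (fun L => Rpower L ((2*p + 2*a - 2*s + 1) / (2*p)) / exp L) _ 4 HRm HS).
    + intros n Hn. rewrite exp_ln_INR; auto.
    + apply ep_subcritical_lower; auto.
    + apply ep_subcritical_upper; auto.
  - apply (asymp_Rstar_seq _ _ _ _ _ _ (fun L => L * ln L / exp L) _ 4 HRm HS).
    + intros n Hn. rewrite exp_ln_INR; auto.
    + apply ep_critical_lower; auto.
    + apply ep_critical_upper; auto.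
  - apply (asymp_Rstar_seq _ _ _ _ _ _ (fun L => L / exp L) _ 4 HRm HS).
    + intros n Hn. rewrite exp_ln_INR; auto.
    + apply ep_supercritical_lower; auto.
    + apply ep_supercritical_upper; auto.
Qed.

Theorem proposition3p5 :
  (* (pp) *)
  (forall (p a s : R) (l : nat -> R),
     0 < p -> 1/2 < a -> 3/2 <= p + a -> 1/2 - p < s ->
     (forall j : nat, (1 <= j)%nat -> (l j) ^ 2 = Rpower (INR j) (- (2 * s))) ->
     let beta := fun j : nat => Rpower (INR j) (2 * p) in
     let gamma := fun j : nat => Rpower (INR j) (- (2 * a)) in
     (s - a < 1/2 ->
        asymp (Rstar_seq l beta gamma)
          (fun n => Rpower (ln (INR n) / INR n) ((2*p + 2*s - 1) / (2*p + 2*a)))) /\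
     (s - a = 1/2 ->
        asymp (Rstar_seq l beta gamma) (fun n => (ln (INR n)) ^ 2 / INR n)) /\
     (s - a > 1/2 ->
        asymp (Rstar_seq l beta gamma) (fun n => ln (INR n) / INR n))) /\
  (* (pe) *)
  (forall (p a s : R) (l : nat -> R),
     0 < p -> 0 < a -> 1/2 - p < s ->
     (forall j : nat, (1 <= j)%nat -> (l j) ^ 2 = Rpower (INR j) (- (2 * s))) ->
     let beta := fun j : nat => Rpower (INR j) (2 * p) in
     let gamma := fun j : nat => exp (- Rpower (INR j) (2 * a) + 1) in
     asymp (Rstar_seq l beta gamma)
       (fun n => Rpower (ln (INR n)) (- ((2*p + 2*s - 1) / (2*a))))) /\
  (* (ep) *)
  (forall (p a s : R) (l : nat -> R),
     0 < p -> 1/2 < a ->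
     (forall j : nat, (1 <= j)%nat -> (l j) ^ 2 = Rpower (INR j) (- (2 * s))) ->
     let beta := fun j : nat => exp (Rpower (INR j) (2 * p) - 1) in
     let gamma := fun j : nat => Rpower (INR j) (- (2 * a)) in
     (s - a < 1/2 ->
        asymp (Rstar_seq l beta gamma)
          (fun n => Rpower (ln (INR n)) ((2*p + 2*a - 2*s + 1) / (2*p)) / INR n)) /\
     (s - a = 1/2 ->
        asymp (Rstar_seq l beta gamma)
          (fun n => ln (INR n) * ln (ln (INR n)) / INR n)) /\
     (s - a > 1/2 ->
        asymp (Rstar_seq l beta gamma) (fun n => ln (INR n) / INR n))).
Proof.
  split; [|split].
  - exact Rstar_polynomial_polynomial.
  - exact Rstar_polynomial_exponential.
  - exact Rstar_exponential_polynomial.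
Qed.
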